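(* Let $(V,m)$ be a discrete measure space and $(b,c)$ a connected graph over $(V,m)$, and let $\mathcal B^{(N)}=D(Q^{(N)})/D(Q^{(D)})$. Then the map $$P:\mathcal B^{(N)}\to\{u_\infty:u\in D(Q^{(N)})\},\qquad [u]\mapsto u_\infty,$$ is well-defined (i.e. $u_\infty=0$ for all $u\in D(Q^{(D)})$), linear, continuous (with the quotient topology from $\langle\cdot,\cdot\rangle_{Q^{(N)}}$ on $\mathcal B^{(N)}$ and locally uniform convergence on the target) and onto. In particular, for every $f\in D(Q^{(N)})$ there exists $w\in D(Q^{(N)})$ with $(\widetilde L+1)w=0$ and $w_\infty=f_\infty$. Furthermore, if $\widehat V$ is compact, then $P$ is injective.
   Context: $V$ is a finite or countably infinite set and $m:V\to(0,\infty)$; $(V,m)$ is a discrete measure space. $C(V)$ is the set of all functions $V\to\mathbb C$, $C_c(V)$ the finitely supported ones, and $\ell^2(V,m)$ carries $\langle u,v\rangle=\sum_x u(x)\overline{v(x)}m(x)$. A graph over $(V,m)$ is a pair $(b,c)$ with $c:V\to[0,\infty)$, $b:V\times V\to[0,\infty)$, $b(x,x)=0$, $b(x,y)=b(y,x)$, $\sum_y b(x,y)<\infty$. A path from $x$ to $y$ is a finite sequence $x=x_1,\dots,x_n=y$ with $b(x_j,x_{j+1})>0$; the graph is connected if any two vertices are joined by a path. Let $\widetilde F=\{u\in C(V):\sum_y|b(x,y)u(y)|<\infty\ \forall x\}$ and $\widetilde L u(x)=\frac{1}{m(x)}\sum_y b(x,y)(u(x)-u(y))+\frac{c(x)}{m(x)}u(x)$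 for $u\in\widetilde F$. $Q^{(N)}$ is the form on $\ell^2(V,m)$ with domain $D(Q^{(N)})=\{u\in\ell^2(V,m):\frac12\sum_{x,y}b(x,y)|u(x)-u(y)|^2+\sum_x c(x)|u(x)|^2<\infty\}$ and $Q^{(N)}(u,v)=\frac12\sum_{x,y}b(x,y)(u(x)-u(y))\overline{(v(x)-v(y))}+\sum_x c(x)u(x)\overline{v(x)}$; it is closed, $D(Q^{(N)})\subseteq\widetilde F$, and $\langle u,v\rangle_{Q^{(N)}}=Q^{(N)}(u,v)+\langle u,v\rangle$. $Q^{(D)}$ is the closure of the restriction of $Q^{(N)}$ to $C_c(V)$. The length of a path $\gamma=(x_1,\dots,x_n)$ is $L(\gamma)=\sum_{j=1}^{n-1}b(x_j,x_{j+1})^{-1/2}$ and $d(x,y)=\inf\{L(\gamma):\gamma\text{ a path from }x\text{ to }y\}$, a metric on $V$. $\widehat V$ is the metric completion of $(V,d)$ and $V_\infty=\widehat V\setminus V$. Every $u\in D(Q^{(N)})$ satisfies $|u(x)-u(y)|\le Q^{(N)}(u,u)^{1/2}d(x,y)$ and extends uniquely to a Lipschitz function $\widehat u$ on $\widehat V$; $u_\infty$ is the restriction of $\widehat u$ to $V_\infty$ (and $u_\infty:=0$ if $V_\infty=\emptyset$). *)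

From Stdlib Require Import Reals Lra List ClassicalEpsilon.
Import ListNotations.
Open Scope R_scope.

Definition Cpx : Type := (R * R)%type.
Definition C0 : Cpx := (0, 0).
Definition RtoC (r : R) : Cpx := (r, 0).
Definition Cadd (z w : Cpx) : Cpx := (fst z + fst w, snd z + snd w).
Definition Copp (z : Cpx) : Cpx := (- fst z, - snd z).
Definition Csub (z w : Cpx) : Cpx := Cadd z (Copp w).
Definition Cmul (z w : Cpx) : Cpx :=
  (fst z * fst w - snd z * snd w, fst z * snd w + snd z * fst w).
Definition Cmod2 (z : Cpx) : R := Rsqr (fst z) + Rsqr (snd z).
Definition Cnorm (z : Cpx) : R := sqrt (Cmod2 z).

Definition C_cv (s : nat -> Cpx) (z : Cpx) : Prop :=
  forall eps, eps > 0 -> exists N, forall n, (N <= n)%nat -> Cnorm (Csub (s n) z) < eps.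

Definition fin_sum {T : Type} (f : T -> R) (l : list T) : R :=
  fold_right (fun x acc => f x + acc) 0 l.
Definition fin_sumC {T : Type} (f : T -> Cpx) (l : list T) : Cpx :=
  fold_right (fun x acc => Cadd (f x) acc) C0 l.

Definition nn_has_sum {T : Type} (f : T -> R) (s : R) : Prop :=
  is_lub (fun r => exists l, NoDup l /\ r = fin_sum f l) s.
Definition nn_summable {T : Type} (f : T -> R) : Prop := exists s, nn_has_sum f s.
Definition nnsum {T : Type} (f : T -> R) : R :=
  epsilon (inhabits 0) (fun s => nn_has_sum f s).

Definition C_has_sum {T : Type} (f : T -> Cpx) (S : Cpx) : Prop :=
  forall eps, eps > 0 -> exists l0, NoDup l0 /\
    forall l, NoDup l -> incl l0 l -> Cnorm (Csub (fin_sumC f l) S) < eps.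

Definition countable_set (V : Type) : Prop :=
  exists enc : V -> nat, forall x y, enc x = enc y -> x = y.

Definition is_graph {V : Type} (m : V -> R) (b : V -> V -> R) (c : V -> R) : Prop :=
  (forall x, 0 < m x) /\ (forall x, 0 <= c x) /\
  (forall x y, 0 <= b x y) /\ (forall x, b x x = 0) /\
  (forall x y, b x y = b y x) /\ (forall x, nn_summable (b x)).

(* a path x = x_1, ..., x_n = y, given as the list [x_1; ...; x_n] *)
Fixpoint chain {V : Type} (b : V -> V -> R) (x : V) (l : list V) : Prop :=
  match l with
  | [] => True
  | y :: l' => b x y > 0 /\ chain b y l'
  end.
Definition is_path {V : Type} (b : V -> V -> R) (x y : V) (p : list V) : Prop :=
  match p with
  | [] => False
  | x1 :: l => x1 = x /\ chain b x1 l /\ last p x1 = y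
  end.
Definition connected {V : Type} (b : V -> V -> R) : Prop :=
  forall x y, exists p, is_path b x y p.

Fixpoint path_length_from {V : Type} (b : V -> V -> R) (x : V) (l : list V) : R :=
  match l with
  | [] => 0
  | y :: l' => / sqrt (b x y) + path_length_from b y l'
  end.
Definition path_length {V : Type} (b : V -> V -> R) (p : list V) : R :=
  match p with [] => 0 | x :: l => path_length_from b x l end.

Definition is_glb (E : R -> Prop) (r : R) : Prop :=
  (forall z, E z -> r <= z) /\ (forall r', (forall z, E z -> r' <= z) -> r' <= r).

Definition dist {V : Type} (b : V -> V -> R) (x y : V) : R :=
  epsilon (inhabits 0)
    (fun r => is_glb (fun L => exists p, is_path b x y p /\ L = path_length b p) r).

(* ---------- metric completion: points of V^ are d-Cauchy sequences ---------- *)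
Definition cauchy {V : Type} (b : V -> V -> R) (s : nat -> V) : Prop :=
  forall eps, eps > 0 -> exists N, forall n k, (N <= n)%nat -> (N <= k)%nat ->
    dist b (s n) (s k) < eps.

Definition dhat {V : Type} (b : V -> V -> R) (s t : nat -> V) : R :=
  epsilon (inhabits 0) (fun r => Un_cv (fun n => dist b (s n) (t n)) r).

(* representatives of points of V_infty = V^ \ V *)
Definition Vinf_pt {V : Type} (b : V -> V -> R) (s : nat -> V) : Prop :=
  cauchy b s /\ ~ (exists x, Un_cv (fun n => dist b (s n) x) 0).

(* compactness of V^ (sequential compactness of the completion) *)
Definition Vhat_compact {V : Type} (b : V -> V -> R) : Prop :=
  forall S : nat -> nat -> V, (forall k, cauchy b (S k)) ->
    exists phi : nat -> nat, (forall k, (phi k < phi (Datatypes.S k))%nat) /\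
      exists t, cauchy b t /\ Un_cv (fun k => dhat b (S (phi k)) t) 0.

(* boundary value u_infty at the point of V_infty represented by s *)
Definition bval {V : Type} (u : V -> Cpx) (s : nat -> V) : Cpx :=
  epsilon (inhabits C0) (fun z => C_cv (fun n => u (s n)) z).

Definition in_l2 {V : Type} (m : V -> R) (u : V -> Cpx) : Prop :=
  nn_summable (fun x => Cmod2 (u x) * m x).

Definition in_DN {V : Type} (m : V -> R) (b : V -> V -> R) (c : V -> R) (u : V -> Cpx) : Prop :=
  in_l2 m u /\
  nn_summable (fun p : V * V => b (fst p) (snd p) * Cmod2 (Csub (u (fst p)) (u (snd p)))) /\
  nn_summable (fun x => c x * Cmod2 (u x)).

Definition QN {V : Type} (b : V -> V -> R) (c : V -> R) (u : V -> Cpx) : R :=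
  / 2 * nnsum (fun p : V * V => b (fst p) (snd p) * Cmod2 (Csub (u (fst p)) (u (snd p))))
  + nnsum (fun x => c x * Cmod2 (u x)).

Definition QN_norm2 {V : Type} (m : V -> R) (b : V -> V -> R) (c : V -> R) (u : V -> Cpx) : R :=
  QN b c u + nnsum (fun x => Cmod2 (u x) * m x).

Definition fin_supp {V : Type} (u : V -> Cpx) : Prop :=
  exists l : list V, forall x, ~ In x l -> u x = C0.

Definition fsub {V : Type} (u v : V -> Cpx) : V -> Cpx := fun x => Csub (u x) (v x).

(* D(Q^(D)): closure of C_c(V) in D(Q^(N)) w.r.t. the form norm *)
Definition in_DD {V : Type} (m : V -> R) (b : V -> V -> R) (c : V -> R) (u : V -> Cpx) : Prop :=
  in_DN m b c u /\
  forall eps, eps > 0 -> exists phi, fin_supp phi /\ QN_norm2 m b c (fsub u phi) < eps.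

Definition in_Ftilde {V : Type} (b : V -> V -> R) (u : V -> Cpx) : Prop :=
  forall x, nn_summable (fun y => b x y * Cnorm (u y)).

Definition Lt_plus_one_zero {V : Type} (m : V -> R) (b : V -> V -> R) (c : V -> R)
  (w : V -> Cpx) : Prop :=
  in_Ftilde b w /\
  forall x, exists S, C_has_sum (fun y => Cmul (RtoC (b x y)) (Csub (w x) (w y))) S /\
    Cadd (Cmul (RtoC (/ m x)) (Cadd S (Cmul (RtoC (c x)) (w x)))) (w x) = C0.

From Pilot Require Import Defs.
From Stdlib Require Import Reals Lra Lia List Permutation FinFun ClassicalEpsilon Classical FunctionalExtensionality.
(* Re-exported last so that [dist] denotes the graph metric of [Defs]. *)
Import Pilot.Defs.
Import ListNotations.
Open Scope R_scope.

(** The key estimate is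
    that every [u] in [D(Q^(N))] is Lipschitz for the path metric [d] with
    constant its form norm [||u||], and satisfies
    [|u(y)| <= ||u|| (m(x)^(-1/2) + d(x, y))].  Hence [u] converges along
    Cauchy sequences, which defines the boundary values [u_infty], and the
    boundary map is linear and continuous for the quotient norm.  Functions
    of [C_c(V)] vanish near every point at infinity, so by the same
    estimate all of [D(Q^(D))] does: the map is well defined.

    The harmonic representative of [f] is the minimizer [w] of the form on
    [f + C_c(V)]: minimizing sequences are Cauchy by the parallelogram law,
    [D(Q^(N))] is complete (Fatou), and perturbing [w] at one vertex shows
    [(L~ + 1) w = 0].  Finally, if [V^] is compact, a function vanishing
    on [V_infty] is small off a finite set; subtracting a truncation then
    gives finitely supported approximants, whence injectivity. *)

Definition dec (P : Prop) : bool := if excluded_middle_informative P then true else false.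

Lemma decP {P : Prop} : dec P = true -> P.
Proof. unfold dec; destruct (excluded_middle_informative P); easy. Qed.
Lemma decN {P : Prop} : dec P = false -> ~ P.
Proof. unfold dec; destruct (excluded_middle_informative P); easy. Qed.
Lemma dec_true {P : Prop} : P -> dec P = true.
Proof. unfold dec; destruct (excluded_middle_informative P); easy. Qed.
Lemma dec_false {P : Prop} : ~ P -> dec P = false.
Proof. unfold dec; destruct (excluded_middle_informative P); easy. Qed.

Lemma le_of_eps (a b : R) : (forall e, e > 0 -> a < b + e) -> a <= b.
Proof. intros H. apply Rnot_lt_le; intros Hl. specialize (H ((a - b) / 2)). lra. Qed.

Lemma Un_cv_const c : Un_cv (fun _ => c) c.
Proof. intros e He; exists 0%nat; intros; unfold R_dist; rewrite Rminus_diag, Rabs_R0; auto. Qed.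

Lemma Un_cv_ext u v l : (forall n, u n = v n) -> Un_cv u l -> Un_cv v l.
Proof. intros H. replace v with u; auto. apply functional_extensionality; auto. Qed.

Lemma Un_cv_ge (a : nat -> R) l X N : Un_cv a l -> (forall n, (N <= n)%nat -> X <= a n) -> X <= l.
Proof.
  intros H HX. apply le_of_eps; intros e He. destruct (H e He) as [N1 HN].
  specialize (HN (max N N1) ltac:(lia)). specialize (HX (max N N1) ltac:(lia)).
  unfold R_dist in HN. apply Rabs_def2 in HN. lra.
Qed.

Lemma Un_cv_le (a : nat -> R) l M N : Un_cv a l -> (forall n, (N <= n)%nat -> a n <= M) -> l <= M.
Proof.
  intros H HM. apply le_of_eps; intros e He. destruct (H e He) as [N1 HN].
  specialize (HN (max N N1) ltac:(lia)). specialize (HM (max N N1) ltac:(lia)).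
  unfold R_dist in HN. apply Rabs_def2 in HN. lra.
Qed.

Lemma Un_cv_squeeze0 (f g : nat -> R) : (forall n, 0 <= f n <= g n) -> Un_cv g 0 -> Un_cv f 0.
Proof.
  intros H Hg e He. destruct (Hg e He) as [N HN]. exists N. intros n Hn.
  specialize (HN n Hn). specialize (H n). unfold R_dist in *. rewrite Rminus_0_r in *.
  rewrite Rabs_right in * by lra. lra.
Qed.

Lemma inv_S_pos n : 0 < / INR (S n).
Proof. apply Rinv_0_lt_compat, lt_0_INR; lia. Qed.

Lemma inv_S_le n N : (0 < N)%nat -> (N <= n)%nat -> / INR (S n) <= / INR N.
Proof. intros H0 H. apply Rinv_le_contravar; [apply lt_0_INR; lia|apply le_INR; lia]. Qed.

Lemma inv_S_cv : Un_cv (fun n => / INR (S n)) 0.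
Proof.
  intros e He. destruct (archimed_cor1 e He) as [N [HN HN0]]. exists N. intros n Hn. unfold R_dist.
  rewrite Rminus_0_r, Rabs_right by (apply Rle_ge, Rlt_le, inv_S_pos).
  apply Rle_lt_trans with (/ INR N); auto. apply inv_S_le; lia.
Qed.

Lemma glb_exists (E : R -> Prop) : (exists x, E x) -> (forall x, E x -> 0 <= x) -> exists d, is_glb E d.
Proof.
  intros [x0 Hx0] Hnn.
  destruct (completeness (fun r => E (- r))) as [s [Hs1 Hs2]].
  - exists 0. intros r Hr. apply Hnn in Hr. lra.
  - exists (- x0). rewrite Ropp_involutive; auto.
  - exists (- s). split.
    + intros z Hz. assert (- z <= s) by (apply Hs1; rewrite Ropp_involutive; auto). lra.
    + intros r' Hr'. assert (s <= - r'); [|lra]. apply Hs2. intros z Hz. specialize (Hr' _ Hz). lra.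
Qed.

Section FinSum.
Context {T : Type}.
Implicit Types (f g : T -> R) (l : list T).

Lemma fin_sum_app f l1 l2 : fin_sum f (l1 ++ l2) = fin_sum f l1 + fin_sum f l2.
Proof. induction l1 as [|a l1 IH]; simpl; rewrite ?IH; lra. Qed.

Lemma fin_sum_perm f l1 l2 : Permutation l1 l2 -> fin_sum f l1 = fin_sum f l2.
Proof. induction 1; simpl; lra. Qed.

Lemma fin_sum_nonneg f l : (forall x, 0 <= f x) -> 0 <= fin_sum f l.
Proof. intros H; induction l as [|a l IH]; simpl; [lra|]. specialize (H a); lra. Qed.

Lemma fin_sum_le f g l : (forall x, f x <= g x) -> fin_sum f l <= fin_sum g l.
Proof. intros H; induction l as [|a l IH]; simpl; [lra|]. specialize (H a); lra. Qed.

Lemma fin_sum_plus f g l : fin_sum (fun x => f x + g x) l = fin_sum f l + fin_sum g l.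
Proof. induction l as [|a l IH]; simpl; lra. Qed.

Lemma fin_sum_scal f k l : fin_sum (fun x => k * f x) l = k * fin_sum f l.
Proof. induction l as [|a l IH]; simpl; [ring|]. rewrite IH; ring. Qed.

Lemma fin_sum_zero f l : (forall x, In x l -> f x = 0) -> fin_sum f l = 0.
Proof.
  intros H; induction l as [|a l IH]; simpl; [lra|].
  rewrite IH, (H a (or_introl eq_refl)); [ring|]. intros x Hx; apply H; right; auto.
Qed.

Lemma fin_sum_split f (P : T -> bool) l :
  fin_sum f l = fin_sum f (filter P l) + fin_sum f (filter (fun x => negb (P x)) l).
Proof. induction l as [|a l IH]; simpl; [lra|]. destruct (P a); simpl; lra. Qed.

Lemma incl_perm_split l1 l2 : NoDup l1 -> incl l1 l2 -> exists l3, Permutation l2 (l1 ++ l3).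
Proof.
  revert l2; induction l1 as [|a l1 IH]; intros l2 Hnd Hi.
  - exists l2; apply Permutation_refl.
  - destruct (in_split a l2 (Hi a (or_introl eq_refl))) as [A [B ->]].
    inversion Hnd as [|? ? Ha Hnd1]; subst.
    destruct (IH (A ++ B)) as [l3 Hl3]; auto.
    + intros y Hy. assert (Hy2 : In y (A ++ a :: B)) by (apply Hi; right; auto).
      apply in_app_iff in Hy2; apply in_app_iff. destruct Hy2 as [H|[H|H]]; subst; tauto.
    + exists l3. eapply Permutation_trans; [apply Permutation_sym, Permutation_middle|]. constructor; auto.
Qed.

Lemma fin_sum_incl f l1 l2 : (forall x, 0 <= f x) -> NoDup l1 -> incl l1 l2 ->
  fin_sum f l1 <= fin_sum f l2.
Proof.
  intros Hf Hnd Hi. destruct (incl_perm_split l1 l2 Hnd Hi) as [l3 H].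
  rewrite (fin_sum_perm f _ _ H), fin_sum_app. pose proof (fin_sum_nonneg f l3 Hf); lra.
Qed.

Lemma nodup_union l1 l2 : exists l, NoDup l /\ incl l1 l /\ incl l2 l.
Proof.
  exists (nodup (fun x y : T => excluded_middle_informative (x = y)) (l1 ++ l2)).
  split; [apply NoDup_nodup|].
  split; intros x Hx; apply nodup_In, in_app_iff; auto.
Qed.

Lemma fin_sum_supp_le f l L : (forall x, 0 <= f x) -> (forall x, ~ In x l -> f x = 0) ->
  NoDup L -> fin_sum f L <= fin_sum f l.
Proof.
  intros Hf Hz Hnd. rewrite (fin_sum_split f (fun x => dec (In x l)) L).
  rewrite (fin_sum_zero f (filter (fun x => negb _) L)).
  - rewrite Rplus_0_r. apply fin_sum_incl; auto.
    + apply NoDup_filter; auto.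
    + intros x Hx. apply filter_In in Hx. apply decP; tauto.
  - intros x Hx. apply filter_In in Hx. apply Hz, decN.
    apply Bool.negb_true_iff; tauto.
Qed.
End FinSum.

Lemma fin_sum_cv {T : Type} (f : nat -> T -> R) (F : T -> R) l :
  (forall x, Un_cv (fun n => f n x) (F x)) -> Un_cv (fun n => fin_sum (f n) l) (fin_sum F l).
Proof.
  intros H. induction l as [|a l IH]; simpl.
  - apply Un_cv_const.
  - apply CV_plus; auto.
Qed.

Section NonnegSums.
Context {T : Type}.
Implicit Types (f g : T -> R).

Lemma nnsum_spec f : nn_summable f -> nn_has_sum f (nnsum f).
Proof. intros H. unfold nnsum. apply epsilon_spec. exact H. Qed.

Lemma nnsum_ge f l : nn_summable f -> NoDup l -> fin_sum f l <= nnsum f.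
Proof. intros H Hl. apply (nnsum_spec f H). exists l; auto. Qed.

Lemma nnsum_nonneg f : nn_summable f -> 0 <= nnsum f.
Proof. intros H. apply (nnsum_ge f []); [auto|constructor]. Qed.

Lemma nn_bound f M : (forall l, NoDup l -> fin_sum f l <= M) -> nn_summable f /\ nnsum f <= M.
Proof.
  intros H.
  assert (Hs : nn_summable f).
  { destruct (completeness (fun r => exists l, NoDup l /\ r = fin_sum f l)) as [s Hs].
    - exists M. intros r [l [Hl ->]]. auto.
    - exists 0, []. split; [constructor|reflexivity].
    - exists s; exact Hs. }
  split; auto. apply (nnsum_spec f Hs). intros r [l [Hl ->]]; auto.
Qed.

Lemma nnsum_approx f e : nn_summable f -> e > 0 -> exists l, NoDup l /\ nnsum f - e < fin_sum f l.
Proof.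
  intros H He. apply NNPP; intros Hn. assert (nnsum f <= nnsum f - e); [|lra].
  apply (nnsum_spec f H). intros r [l [Hl ->]]. apply Rnot_lt_le. intros Hlt. apply Hn. exists l; auto.
Qed.

Lemma nnsum_mono f g : nn_summable g -> (forall x, f x <= g x) -> nn_summable f /\ nnsum f <= nnsum g.
Proof. intros Hg H. apply nn_bound. intros l Hl. eapply Rle_trans; [apply fin_sum_le, H|]. apply nnsum_ge; auto. Qed.

Lemma nn_summable_mono f g : nn_summable g -> (forall x, f x <= g x) -> nn_summable f.
Proof. intros; apply (nnsum_mono f g); auto. Qed.

Lemma nnsum_ext f g : (forall x, f x = g x) -> nnsum f = nnsum g.
Proof. intros H. replace f with g; auto. apply functional_extensionality; auto. Qed.

Lemma nn_summable_ext f g : (forall x, f x = g x) -> nn_summable f -> nn_summable g.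
Proof. intros H. replace g with f; auto. apply functional_extensionality; auto. Qed.

Lemma nnsum_plus f g : (forall x, 0 <= f x) -> (forall x, 0 <= g x) ->
  nn_summable f -> nn_summable g ->
  nn_summable (fun x => f x + g x) /\ nnsum (fun x => f x + g x) = nnsum f + nnsum g.
Proof.
  intros Hf Hg Sf Sg.
  destruct (nn_bound (fun x => f x + g x) (nnsum f + nnsum g)) as [S Hle].
  { intros l Hl. rewrite fin_sum_plus. pose proof (nnsum_ge f l Sf Hl); pose proof (nnsum_ge g l Sg Hl); lra. }
  split; auto. apply Rle_antisym; auto. apply le_of_eps; intros e He.
  destruct (nnsum_approx f (e/3) Sf) as [l1 [N1 H1]]; [lra|].
  destruct (nnsum_approx g (e/3) Sg) as [l2 [N2 H2]]; [lra|].
  destruct (nodup_union l1 l2) as [l [Nl [I1 I2]]].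
  pose proof (fin_sum_incl f l1 l Hf N1 I1). pose proof (fin_sum_incl g l2 l Hg N2 I2).
  pose proof (nnsum_ge _ l S Nl). rewrite fin_sum_plus in H3. lra.
Qed.

Lemma nnsum_scal f k : 0 <= k -> nn_summable f ->
  nn_summable (fun x => k * f x) /\ nnsum (fun x => k * f x) = k * nnsum f.
Proof.
  intros Hk Sf.
  destruct (nn_bound (fun x => k * f x) (k * nnsum f)) as [S Hle].
  { intros l Hl. rewrite fin_sum_scal. apply Rmult_le_compat_l; auto. apply nnsum_ge; auto. }
  split; auto. apply Rle_antisym; auto.
  destruct (Req_dec k 0) as [->|Hk0]; [rewrite Rmult_0_l; apply nnsum_nonneg; auto|].
  assert (nnsum f <= nnsum (fun x => k * f x) / k).
  { apply (nnsum_spec f Sf). intros r [l [Hl ->]]. pose proof (nnsum_ge _ l S Hl).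
    rewrite fin_sum_scal in H. apply (Rmult_le_reg_l k); [lra|]. field_simplify; lra. }
  apply (Rmult_le_compat_l k) in H; [|lra]. field_simplify in H; lra.
Qed.

Lemma nn_lin f g al be : 0 <= al -> 0 <= be -> (forall x, 0 <= f x) -> (forall x, 0 <= g x) ->
  nn_summable f -> nn_summable g ->
  nn_summable (fun x => al * f x + be * g x) /\
  nnsum (fun x => al * f x + be * g x) = al * nnsum f + be * nnsum g.
Proof.
  intros Ha Hb Hf Hg Sf Sg.
  destruct (nnsum_scal f al Ha Sf) as [S1 Q1]. destruct (nnsum_scal g be Hb Sg) as [S2 Q2].
  destruct (nnsum_plus _ _ (fun x => Rmult_le_pos _ _ Ha (Hf x)) (fun x => Rmult_le_pos _ _ Hb (Hg x)) S1 S2)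
    as [S3 Q3].
  split; auto. rewrite Q3, Q1, Q2; auto.
Qed.

Lemma nn_summable_supp f l : (forall x, 0 <= f x) -> (forall x, ~ In x l -> f x = 0) -> nn_summable f.
Proof. intros Hf Hz. apply (nn_bound f (fin_sum f l)). intros L HL. apply fin_sum_supp_le; auto. Qed.

Lemma nnsum_dominated_cv (f : nat -> T -> R) (g : T -> R) :
  (forall n x, 0 <= f n x) -> (forall n x, f n x <= g x) -> nn_summable g ->
  (forall x, Un_cv (fun n => f n x) 0) -> Un_cv (fun n => nnsum (f n)) 0.
Proof.
  intros H0 H1 Sg Hcv e He.
  destruct (nnsum_approx g (e/3) Sg) as [l [Nl Hl]]; [lra|].
  destruct (fin_sum_cv f (fun _ => 0) l Hcv (e/3)) as [N HN]; [lra|].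
  rewrite fin_sum_zero in HN by auto.
  exists N. intros n Hn. specialize (HN n Hn). unfold R_dist in *. rewrite Rminus_0_r in *.
  assert (Hg0 : forall x, 0 <= g x) by (intros x; specialize (H0 n x); specialize (H1 n x); lra).
  assert (Hb : nn_summable (f n) /\ nnsum (f n) <= 2 * e / 3).
  { apply nn_bound. intros L NL.
    rewrite (fin_sum_split (f n) (fun x => dec (In x l)) L).
    set (L2 := filter (fun x => negb (dec (In x l))) L).
    assert (A1 : fin_sum (f n) (filter (fun x => dec (In x l)) L) <= fin_sum (f n) l).
    { apply fin_sum_incl; auto. apply NoDup_filter; auto. intros x Hx. apply filter_In in Hx. apply decP; tauto. }
    assert (A2 : fin_sum (f n) L2 <= fin_sum g L2) by (apply fin_sum_le; auto).
    assert (A3 : fin_sum g L2 + fin_sum g l <= nnsum g).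
    { rewrite <- fin_sum_app. apply nnsum_ge; auto. apply NoDup_app; auto; [apply NoDup_filter; auto|].
      intros x Hx Hx2. apply filter_In in Hx. rewrite (dec_true Hx2) in Hx. destruct Hx; discriminate. }
    pose proof (fin_sum_nonneg (f n) l (H0 n)). rewrite Rabs_right in HN; lra. }
  destruct Hb as [Sf Hb]. pose proof (nnsum_nonneg _ Sf). rewrite Rabs_right; lra.
Qed.
End NonnegSums.

Definition R_has_sum {T : Type} (f : T -> R) (s : R) : Prop :=
  forall e, e > 0 -> exists l0, NoDup l0 /\
    forall l, NoDup l -> incl l0 l -> Rabs (fin_sum f l - s) < e.

Section RealSums.
Context {T : Type}.
Implicit Types (f g : T -> R).

Lemma R_has_sum_nn f : (forall x, 0 <= f x) -> nn_summable f -> R_has_sum f (nnsum f).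
Proof.
  intros Hf S e He. destruct (nnsum_approx f e S He) as [l0 [N0 H0]]. exists l0; split; auto.
  intros l Nl Il. pose proof (fin_sum_incl f l0 l Hf N0 Il). pose proof (nnsum_ge f l S Nl).
  apply Rabs_def1; lra.
Qed.

Lemma R_has_sum_plus f g s t : R_has_sum f s -> R_has_sum g t -> R_has_sum (fun x => f x + g x) (s + t).
Proof.
  intros Hf Hg e He. destruct (Hf (e/2)) as [l1 [N1 H1]]; [lra|]. destruct (Hg (e/2)) as [l2 [N2 H2]]; [lra|].
  destruct (nodup_union l1 l2) as [l0 [N0 [I1 I2]]]. exists l0; split; auto.
  intros l Nl Il. rewrite fin_sum_plus.
  specialize (H1 l Nl (incl_tran I1 Il)). specialize (H2 l Nl (incl_tran I2 Il)).
  apply Rabs_def2 in H1; apply Rabs_def2 in H2. apply Rabs_def1; lra.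
Qed.

Lemma R_has_sum_scal f s k : R_has_sum f s -> R_has_sum (fun x => k * f x) (k * s).
Proof.
  intros Hf e He. assert (Hk : Rabs k + 1 > 0) by (pose proof (Rabs_pos k); lra).
  destruct (Hf (e / (Rabs k + 1))) as [l0 [N0 H0]]; [apply Rdiv_lt_0_compat; lra|].
  exists l0; split; auto. intros l Nl Il. rewrite fin_sum_scal.
  replace (k * fin_sum f l - k * s) with (k * (fin_sum f l - s)) by ring. rewrite Rabs_mult.
  specialize (H0 l Nl Il). pose proof (Rabs_pos (fin_sum f l - s)).
  apply Rle_lt_trans with ((Rabs k + 1) * Rabs (fin_sum f l - s)); [nra|].
  apply (Rmult_lt_compat_l (Rabs k + 1)) in H0; [|lra]. field_simplify in H0; lra.
Qed.

Lemma R_has_sum_unique f s t : R_has_sum f s -> R_has_sum f t -> s = t.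
Proof.
  intros Hs Ht. apply NNPP; intros Hne. assert (He : Rabs (s - t) / 2 > 0).
  { apply Rdiv_lt_0_compat; [|lra]. apply Rabs_pos_lt. lra. }
  destruct (Hs _ He) as [l1 [N1 H1]]; destruct (Ht _ He) as [l2 [N2 H2]].
  destruct (nodup_union l1 l2) as [l [N [I1 I2]]].
  specialize (H1 l N I1); specialize (H2 l N I2).
  pose proof (Rabs_triang (fin_sum f l - t) (s - fin_sum f l)).
  replace (fin_sum f l - t + (s - fin_sum f l)) with (s - t) in H by ring.
  rewrite Rabs_minus_sym in H1. lra.
Qed.

Lemma nnsum_eq_of_R_has_sum f s : (forall x, 0 <= f x) -> nn_summable f -> R_has_sum f s -> nnsum f = s.
Proof. intros H0 S H. apply (R_has_sum_unique f); auto. apply R_has_sum_nn; auto. Qed.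

Lemma R_has_sum_ext f g s : (forall x, f x = g x) -> R_has_sum f s -> R_has_sum g s.
Proof. intros H. replace g with f; auto. apply functional_extensionality; auto. Qed.

(** Absolute convergence: a family dominated by a summable one has a sum
    (split into positive and negative parts). *)
Lemma R_has_sum_dom f g : (forall x, Rabs (f x) <= g x) -> nn_summable g -> exists s, R_has_sum f s.
Proof.
  intros H S.
  assert (S1 : nn_summable (fun x => Rmax (f x) 0)).
  { apply (nn_summable_mono _ g S). intros x; specialize (H x).
    pose proof (Rle_abs (f x)); pose proof (Rabs_pos (f x)). apply Rmax_lub; lra. }
  assert (S2 : nn_summable (fun x => Rmax (- f x) 0)).
  { apply (nn_summable_mono _ g S). intros x; specialize (H x).
    pose proof (Rle_abs (- f x)); rewrite Rabs_Ropp in *; pose proof (Rabs_pos (f x)). apply Rmax_lub; lra. }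
  pose proof (R_has_sum_nn _ (fun x => Rmax_r _ _) S1) as H1.
  pose proof (R_has_sum_scal _ _ (-1) (R_has_sum_nn _ (fun x => Rmax_r _ _) S2)) as H2.
  eexists. eapply R_has_sum_ext; [|apply (R_has_sum_plus _ _ _ _ H1 H2)].
  intros x; simpl. unfold Rmax; destruct (Rle_dec (f x) 0); destruct (Rle_dec (- f x) 0); lra.
Qed.

Lemma R_has_sum_point (x : T) (r : R) : R_has_sum (fun z => if dec (z = x) then r else 0) r.
Proof.
  intros e He. exists [x]; split; [repeat constructor; auto|].
  intros l Nl Il. destruct (incl_perm_split [x] l ltac:(repeat constructor; auto) Il) as [l3 Hp].
  rewrite (fin_sum_perm _ _ _ Hp). simpl. rewrite (dec_true (eq_refl x)), fin_sum_zero.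
  - replace (r + 0 - r) with 0 by ring. rewrite Rabs_R0; lra.
  - intros z Hz. rewrite dec_false; auto. intros ->.
    apply (Permutation_NoDup Hp) in Nl. inversion Nl; auto.
Qed.

Lemma nnsum_point_change f g (x : T) : (forall z, 0 <= f z) -> (forall z, 0 <= g z) ->
  nn_summable f -> nn_summable g -> (forall z, z <> x -> g z = f z) ->
  nnsum g = nnsum f + (g x - f x).
Proof.
  intros Hf Hg Sf Sg Hfg. apply nnsum_eq_of_R_has_sum; auto.
  eapply R_has_sum_ext; [|apply (R_has_sum_plus _ _ _ _ (R_has_sum_nn f Hf Sf) (R_has_sum_point x (g x - f x)))].
  intros z; simpl. destruct (dec (z = x)) eqn:E; [apply decP in E; subst; ring|].
  rewrite Hfg by apply (decN E). ring.
Qed.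
End RealSums.

(** Reindexing a sum along a bijection [i : A -> {b | P b}] with inverse
    [k], the summand vanishing outside [P]. *)
Section Reindex.
Context {A B : Type} (h : B -> R) (i : A -> B) (k : B -> A) (P : B -> Prop).
Hypotheses (HP : forall a, P (i a)) (Hik : forall b, P b -> i (k b) = b)
  (Hki : forall a, k (i a) = a) (Hout : forall b, ~ P b -> h b = 0).

Let reind (L : list B) : list A := map k (filter (fun b => dec (P b)) L).

Lemma reindex_fin_sum L : fin_sum h L = fin_sum (fun a => h (i a)) (reind L).
Proof.
  induction L as [|b L IH]; simpl; auto. unfold reind in *. simpl.
  destruct (dec (P b)) eqn:E; simpl; rewrite IH.
  - rewrite (Hik b (decP E)); auto.
  - rewrite (Hout b (decN E)); lra.
Qed.

Lemma reindex_nodup L : NoDup L -> NoDup (reind L).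
Proof.
  intros Hn. unfold reind. induction Hn as [|b L Hb Hn IH]; simpl; [constructor|].
  destruct (dec (P b)) eqn:E; simpl; auto. constructor; auto.
  intros Hin. apply in_map_iff in Hin. destruct Hin as [c [Hc Hc2]]. apply filter_In in Hc2.
  destruct Hc2 as [Hc2 Hc3].
  assert (b = c) by (rewrite <- (Hik b (decP E)), <- (Hik c (decP Hc3)), Hc; auto). subst; contradiction.
Qed.

Lemma R_has_sum_reindex s : R_has_sum (fun a => h (i a)) s -> R_has_sum h s.
Proof.
  intros Hs e He. destruct (Hs e He) as [l0 [N0 H0]].
  exists (map i l0); split.
  - apply Injective_map_NoDup; auto. intros x y Hxy. rewrite <- (Hki x), <- (Hki y), Hxy; auto.
  - intros l Nl Il. rewrite reindex_fin_sum. apply H0; [apply reindex_nodup; auto|].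
    intros a Ha. apply in_map_iff. exists (i a); split; auto. apply filter_In; split.
    + apply Il, in_map; auto.
    + apply dec_true; auto.
Qed.

Lemma nn_summable_reindex : (forall b, 0 <= h b) -> nn_summable (fun a => h (i a)) -> nn_summable h.
Proof.
  intros H0 S. apply (nn_bound h (nnsum (fun a => h (i a)))). intros L NL.
  rewrite reindex_fin_sum. apply nnsum_ge; auto. apply reindex_nodup; auto.
Qed.
End Reindex.

Lemma Cpx_ext (z w : Cpx) : fst z = fst w -> snd z = snd w -> z = w.
Proof. destruct z, w; simpl; intros -> ->; reflexivity. Qed.

Ltac cpx_ring :=
  apply Cpx_ext; unfold Csub, Cadd, Copp, Cmul, C0, RtoC, fsub; simpl; ring.

Lemma Cmod2_nonneg z : 0 <= Cmod2 z.
Proof. unfold Cmod2, Rsqr; nra. Qed.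
Lemma Cmod2_C0 : Cmod2 C0 = 0.
Proof. unfold Cmod2, C0, Rsqr; simpl; ring. Qed.
Lemma Cmod2_mul a z : Cmod2 (Cmul a z) = Cmod2 a * Cmod2 z.
Proof. unfold Cmod2, Cmul, Rsqr; simpl; ring. Qed.
Lemma Cmod2_Copp z : Cmod2 (Copp z) = Cmod2 z.
Proof. unfold Cmod2, Copp, Rsqr; simpl; ring. Qed.
Lemma Cmod2_sub_sym a z : Cmod2 (Csub a z) = Cmod2 (Csub z a).
Proof. unfold Cmod2, Csub, Cadd, Copp, Rsqr; simpl; ring. Qed.

Lemma Cmod2_add_le a b t : t > 0 -> Cmod2 (Cadd a b) <= (1 + t) * Cmod2 a + (1 + / t) * Cmod2 b.
Proof.
  intros Ht. destruct a as [a1 a2], b as [b1 b2]; unfold Cmod2, Cadd, Rsqr; simpl.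
  assert (Hi : 0 < / t) by (apply Rinv_0_lt_compat; lra).
  assert (H1 : 0 <= (t * a1 - b1) * (t * a1 - b1) * / t) by (apply Rmult_le_pos; [apply Rle_0_sqr|lra]).
  assert (H2 : 0 <= (t * a2 - b2) * (t * a2 - b2) * / t) by (apply Rmult_le_pos; [apply Rle_0_sqr|lra]).
  assert ((1+t)*(a1*a1+a2*a2) + (1+/t)*(b1*b1+b2*b2) - ((a1+b1)*(a1+b1)+(a2+b2)*(a2+b2))
          = (t*a1-b1)*(t*a1-b1)*/t + (t*a2-b2)*(t*a2-b2)*/t) by (field; lra).
  lra.
Qed.

Lemma Cmod2_sub_le2 a z : Cmod2 (Csub a z) <= 2 * Cmod2 a + 2 * Cmod2 z.
Proof.
  pose proof (Cmod2_add_le a (Copp z) 1 ltac:(lra)). rewrite Cmod2_Copp, Rinv_1 in H.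
  unfold Csub; lra.
Qed.

Lemma Cnorm_nonneg z : 0 <= Cnorm z.
Proof. apply sqrt_pos. Qed.
Lemma Cnorm_sq z : Cnorm z * Cnorm z = Cmod2 z.
Proof. apply sqrt_sqrt, Cmod2_nonneg. Qed.

Lemma Cnorm_fst z : Rabs (fst z) <= Cnorm z.
Proof.
  unfold Cnorm, Cmod2. rewrite <- sqrt_Rsqr_abs. apply sqrt_le_1_alt.
  pose proof (Rle_0_sqr (snd z)); lra.
Qed.
Lemma Cnorm_snd z : Rabs (snd z) <= Cnorm z.
Proof.
  unfold Cnorm, Cmod2. rewrite <- sqrt_Rsqr_abs. apply sqrt_le_1_alt.
  pose proof (Rle_0_sqr (fst z)); lra.
Qed.
Lemma Cnorm_le_abs z : Cnorm z <= Rabs (fst z) + Rabs (snd z).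
Proof.
  unfold Cnorm, Cmod2. pose proof (Rabs_pos (fst z)); pose proof (Rabs_pos (snd z)).
  rewrite <- (sqrt_Rsqr (Rabs (fst z) + Rabs (snd z))) by lra. apply sqrt_le_1_alt.
  rewrite (Rsqr_abs (fst z)), (Rsqr_abs (snd z)). unfold Rsqr; nra.
Qed.

Lemma Cnorm_triang a b : Cnorm (Cadd a b) <= Cnorm a + Cnorm b.
Proof.
  pose proof (Cnorm_nonneg a) as Ha; pose proof (Cnorm_nonneg b) as Hb.
  pose proof (Cnorm_sq a) as Sa; pose proof (Cnorm_sq b) as Sb.
  pose proof (Cnorm_nonneg (Cadd a b)); pose proof (Cnorm_sq (Cadd a b)) as Sab.
  destruct a as [a1 a2], b as [b1 b2]; unfold Cmod2, Cadd, Rsqr in *; simpl in *.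
  set (na := Cnorm (a1, a2)) in *; set (nb := Cnorm (b1, b2)) in *.
  assert (CS : a1 * b1 + a2 * b2 <= na * nb).
  { assert ((a1 * b1 + a2 * b2) * (a1 * b1 + a2 * b2) <= (na * nb) * (na * nb)).
    { replace ((na * nb) * (na * nb)) with ((na * na) * (nb * nb)) by ring. rewrite Sa, Sb.
      pose proof (Rle_0_sqr (a1 * b2 - a2 * b1)); unfold Rsqr in *; nra. }
    assert (0 <= na * nb) by nra. nra. }
  nra.
Qed.

Lemma Cnorm_sub_triang a b z : Cnorm (Csub a z) <= Cnorm (Csub a b) + Cnorm (Csub b z).
Proof. replace (Csub a z) with (Cadd (Csub a b) (Csub b z)) by cpx_ring. apply Cnorm_triang. Qed.

Lemma Cnorm_sub_sym a b : Cnorm (Csub a b) = Cnorm (Csub b a).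
Proof. unfold Cnorm. rewrite Cmod2_sub_sym; reflexivity. Qed.

Lemma Csub_fst a b : fst (Csub a b) = fst a - fst b.
Proof. reflexivity. Qed.
Lemma Csub_snd a b : snd (Csub a b) = snd a - snd b.
Proof. reflexivity. Qed.

Lemma Csub_C0 z : Csub z C0 = z.
Proof. cpx_ring. Qed.

Lemma Cnorm_le_shift x y : Cnorm y <= Cnorm x + Cnorm (Csub x y).
Proof.
  pose proof (Cnorm_sub_triang y x C0). rewrite !Csub_C0, Cnorm_sub_sym in H. lra.
Qed.

Lemma C_cv_iff s z :
  C_cv s z <-> Un_cv (fun n => fst (s n)) (fst z) /\ Un_cv (fun n => snd (s n)) (snd z).
Proof.
  split.
  - intros H; split; intros e He; destruct (H e He) as [N HN]; exists N; intros n Hn;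
      specialize (HN n Hn); unfold R_dist.
    + pose proof (Cnorm_fst (Csub (s n) z)); rewrite ?Csub_fst, ?Csub_snd in *; lra.
    + pose proof (Cnorm_snd (Csub (s n) z)); rewrite ?Csub_fst, ?Csub_snd in *; lra.
  - intros [H1 H2] e He. destruct (H1 (e/2)) as [N1 K1]; [lra|]. destruct (H2 (e/2)) as [N2 K2]; [lra|].
    exists (max N1 N2). intros n Hn. specialize (K1 n ltac:(lia)). specialize (K2 n ltac:(lia)).
    unfold R_dist in *. eapply Rle_lt_trans; [apply Cnorm_le_abs|]. rewrite Csub_fst, Csub_snd. lra.
Qed.

Lemma C_cv_unique s a z : C_cv s a -> C_cv s z -> a = z.
Proof.
  intros Ha Hz. apply C_cv_iff in Ha; apply C_cv_iff in Hz. destruct Ha, Hz.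
  apply Cpx_ext; eapply UL_sequence; eauto.
Qed.

Lemma C_cv_ext s t z : (forall n, s n = t n) -> C_cv s z -> C_cv t z.
Proof. intros H. replace t with s; auto. apply functional_extensionality; auto. Qed.

Lemma C_cv_const z : C_cv (fun _ => z) z.
Proof. apply C_cv_iff; split; apply Un_cv_const. Qed.

Lemma C_cv_lin s t x y al be : C_cv s x -> C_cv t y ->
  C_cv (fun n => Cadd (Cmul al (s n)) (Cmul be (t n))) (Cadd (Cmul al x) (Cmul be y)).
Proof.
  intros Hs Ht. apply C_cv_iff in Hs; apply C_cv_iff in Ht. destruct Hs as [s1 s2], Ht as [t1 t2].
  apply C_cv_iff; split; simpl.
  - apply CV_plus; apply CV_minus; apply CV_mult; auto; apply Un_cv_const.
  - apply CV_plus; apply CV_plus; apply CV_mult; auto; apply Un_cv_const.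
Qed.

Lemma C_cv_sub s t a z : C_cv s a -> C_cv t z -> C_cv (fun n => Csub (s n) (t n)) (Csub a z).
Proof.
  intros Hs Ht. replace (Csub a z) with (Cadd (Cmul (1, 0) a) (Cmul (-1, 0) z)) by cpx_ring.
  eapply C_cv_ext; [|exact (C_cv_lin s t a z (1,0) (-1,0) Hs Ht)]. intros n; cpx_ring.
Qed.

Lemma C_cv_Cmod2 s z : C_cv s z -> Un_cv (fun n => Cmod2 (s n)) (Cmod2 z).
Proof. intros H. apply C_cv_iff in H. destruct H. unfold Cmod2, Rsqr. apply CV_plus; apply CV_mult; auto. Qed.

Lemma C_cauchy_cv s :
  (forall e, e > 0 -> exists N, forall n k, (N <= n)%nat -> (N <= k)%nat -> Cnorm (Csub (s n) (s k)) < e) ->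
  exists z, C_cv s z.
Proof.
  intros H.
  assert (H1 : Cauchy_crit (fun n => fst (s n))).
  { intros e He. destruct (H e He) as [N HN]. exists N. intros n k Hn Hk. unfold R_dist.
    pose proof (Cnorm_fst (Csub (s n) (s k))). specialize (HN n k Hn Hk). rewrite ?Csub_fst, ?Csub_snd in *; lra. }
  assert (H2 : Cauchy_crit (fun n => snd (s n))).
  { intros e He. destruct (H e He) as [N HN]. exists N. intros n k Hn Hk. unfold R_dist.
    pose proof (Cnorm_snd (Csub (s n) (s k))). specialize (HN n k Hn Hk). rewrite ?Csub_fst, ?Csub_snd in *; lra. }
  destruct (R_complete _ H1) as [a Ha]. destruct (R_complete _ H2) as [z Hz].
  exists (a, z). apply C_cv_iff; auto.
Qed.

Lemma C_cv_norm_le s z K N : C_cv s z -> (forall n, (N <= n)%nat -> Cnorm (s n) <= K) -> Cnorm z <= K.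
Proof.
  intros H HK. apply le_of_eps; intros e He. destruct (H e He) as [N1 HN].
  specialize (HN (max N N1) ltac:(lia)). specialize (HK (max N N1) ltac:(lia)).
  pose proof (Cnorm_le_shift (s (max N N1)) z). lra.
Qed.

Lemma C_has_sum_of_R {T : Type} (f : T -> Cpx) a z :
  R_has_sum (fun x => fst (f x)) a -> R_has_sum (fun x => snd (f x)) z -> C_has_sum f (a, z).
Proof.
  assert (Hfst : forall l, fst (fin_sumC f l) = fin_sum (fun x => fst (f x)) l)
    by (induction l; simpl; auto; rewrite <- IHl; auto).
  assert (Hsnd : forall l, snd (fin_sumC f l) = fin_sum (fun x => snd (f x)) l)
    by (induction l; simpl; auto; rewrite <- IHl; auto).
  intros H1 H2 e He.
  destruct (H1 (e/2)) as [l1 [N1 K1]]; [lra|]. destruct (H2 (e/2)) as [l2 [N2 K2]]; [lra|].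
  destruct (nodup_union l1 l2) as [l0 [N0 [I1 I2]]]. exists l0; split; auto.
  intros l Nl Il. specialize (K1 l Nl (incl_tran I1 Il)); specialize (K2 l Nl (incl_tran I2 Il)).
  eapply Rle_lt_trans; [apply Cnorm_le_abs|]. rewrite Csub_fst, Csub_snd, Hfst, Hsnd; simpl; lra.
Qed.

(** * The path metric of a connected graph *)

Section PathMetric.
Context {V : Type} (b : V -> V -> R) (Hconn : connected b).

Lemma last_default {T : Type} (a : T) l d d' : last (a :: l) d = last (a :: l) d'.
Proof.
  revert a; induction l as [|z l IH]; intros a; [reflexivity|].
  change (last (z :: l) d = last (z :: l) d'). apply IH.
Qed.

Lemma last_app_cons {T : Type} (x : T) l1 l2 :
  last (x :: l1 ++ l2) x = last (last (x :: l1) x :: l2) (last (x :: l1) x).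
Proof.
  revert x; induction l1 as [|a l1 IH]; intros x; simpl app; [reflexivity|].
  change (last (a :: l1 ++ l2) x = last (last (a :: l1) x :: l2) (last (a :: l1) x)).
  rewrite (last_default a (l1 ++ l2) x a), (last_default a l1 x a). apply IH.
Qed.

Lemma chain_app x l1 l2 : chain b x (l1 ++ l2) <-> chain b x l1 /\ chain b (last (x :: l1) x) l2.
Proof.
  revert x; induction l1 as [|a l1 IH]; intros x; [simpl; tauto|].
  change (b x a > 0 /\ chain b a (l1 ++ l2) <->
          (b x a > 0 /\ chain b a l1) /\ chain b (last (a :: l1) x) l2).
  rewrite IH, (last_default a l1 x a). tauto.
Qed.

Lemma path_length_app x l1 l2 : path_length_from b x (l1 ++ l2) =
  path_length_from b x l1 + path_length_from b (last (x :: l1) x) l2.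
Proof.
  revert x; induction l1 as [|a l1 IH]; intros x; [simpl; lra|].
  change (/ sqrt (b x a) + path_length_from b a (l1 ++ l2) =
          (/ sqrt (b x a) + path_length_from b a l1) + path_length_from b (last (a :: l1) x) l2).
  rewrite IH, (last_default a l1 x a). lra.
Qed.

Lemma inv_sqrt_nonneg r : 0 <= / sqrt r.
Proof.
  destruct (Req_dec (sqrt r) 0) as [H|H]; [rewrite H, Rinv_0; lra|].
  apply Rlt_le, Rinv_0_lt_compat. pose proof (sqrt_pos r); lra.
Qed.

Lemma path_length_nonneg x l : 0 <= path_length_from b x l.
Proof.
  revert x; induction l as [|a l IH]; intros x; simpl; [lra|].
  pose proof (inv_sqrt_nonneg (b x a)); specialize (IH a); lra.
Qed.

Definition path_lengths (x y : V) : R -> Prop :=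
  fun L => exists p, is_path b x y p /\ L = path_length b p.

Lemma path_lengths_nonneg x y L : path_lengths x y L -> 0 <= L.
Proof. intros [p [Hp ->]]. destruct p; simpl; [lra|]. apply path_length_nonneg. Qed.

Lemma dist_spec x y : is_glb (path_lengths x y) (dist b x y).
Proof.
  unfold dist. apply epsilon_spec. apply glb_exists; [|apply path_lengths_nonneg].
  destruct (Hconn x y) as [p Hp]. exists (path_length b p), p; auto.
Qed.

Lemma dist_nonneg x y : 0 <= dist b x y.
Proof. apply (dist_spec x y). apply path_lengths_nonneg. Qed.

Lemma dist_le_path x y p : is_path b x y p -> dist b x y <= path_length b p.
Proof. intros Hp. apply (dist_spec x y). exists p; auto. Qed.

Lemma dist_approx x y e : e > 0 -> exists p, is_path b x y p /\ path_length b p < dist b x y + e.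
Proof.
  intros He. apply NNPP; intros Hn. assert (dist b x y + e <= dist b x y); [|lra].
  apply (dist_spec x y). intros z [p [Hp ->]].
  apply Rnot_lt_le; intros Hl; apply Hn; exists p; auto.
Qed.

Lemma dist_refl x : dist b x x = 0.
Proof.
  apply Rle_antisym; [|apply dist_nonneg].
  apply (dist_le_path x x [x]). simpl; auto.
Qed.

(** Concatenating almost optimal paths gives the triangle inequality. *)
Lemma dist_triangle x y z : dist b x z <= dist b x y + dist b y z.
Proof.
  apply le_of_eps; intros e He.
  destruct (dist_approx x y (e/2)) as [[|x1 l1] [Hp1 HL1]]; [lra|destruct Hp1|].
  destruct (dist_approx y z (e/2)) as [[|y1 l2] [Hp2 HL2]]; [lra|destruct Hp2|].
  destruct Hp1 as [-> [Hc1 Hl1]]. destruct Hp2 as [-> [Hc2 Hl2]].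
  assert (Hp : is_path b x z (x :: l1 ++ l2)).
  { split; auto. split.
    - apply chain_app; split; auto. rewrite Hl1; auto.
    - rewrite last_app_cons, Hl1. auto. }
  pose proof (dist_le_path _ _ _ Hp). simpl path_length in *.
  rewrite path_length_app, Hl1 in H. lra.
Qed.

Lemma lipschitz_chain (u : V -> Cpx) K :
  (forall x y, b x y > 0 -> Cnorm (Csub (u x) (u y)) <= K * / sqrt (b x y)) ->
  forall l x, chain b x l -> Cnorm (Csub (u x) (u (last (x :: l) x))) <= K * path_length_from b x l.
Proof.
  intros HK l; induction l as [|a l IH]; intros x Hch.
  - simpl. replace (Csub (u x) (u x)) with C0 by cpx_ring.
    unfold Cnorm; rewrite Cmod2_C0, sqrt_0; lra.
  - destruct Hch as [Hb Hch]. change (last (x :: a :: l) x) with (last (a :: l) x).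
    rewrite (last_default a l x a). simpl path_length_from.
    eapply Rle_trans; [apply (Cnorm_sub_triang _ (u a))|]. specialize (IH a Hch). specialize (HK x a Hb). lra.
Qed.

Lemma lipschitz_dist (u : V -> Cpx) K : 0 <= K ->
  (forall x y, b x y > 0 -> Cnorm (Csub (u x) (u y)) <= K * / sqrt (b x y)) ->
  forall x y, Cnorm (Csub (u x) (u y)) <= K * dist b x y.
Proof.
  intros HK0 HK x y.
  assert (Hp : forall p, is_path b x y p -> Cnorm (Csub (u x) (u y)) <= K * path_length b p).
  { intros [|x1 l] Hp; [destruct Hp|]. destruct Hp as [-> [Hch Hl]].
    simpl path_length. rewrite <- Hl. apply lipschitz_chain; auto. }
  destruct (Req_dec K 0) as [->|HK1].
  - destruct (Hconn x y) as [p Hp0]. specialize (Hp p Hp0). lra.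
  - assert (Cnorm (Csub (u x) (u y)) / K <= dist b x y).
    { apply (dist_spec x y). intros z [p [Hp1 ->]]. specialize (Hp p Hp1).
      apply (Rmult_le_reg_l K); [lra|]. field_simplify; lra. }
    apply (Rmult_le_compat_l K) in H; [|lra]. field_simplify in H; lra.
Qed.

Lemma dhat_spec s t : cauchy b s -> cauchy b t -> Un_cv (fun n => dist b (s n) (t n)) (dhat b s t).
Proof.
  intros Hs Ht. unfold dhat. apply epsilon_spec.
  enough (Hc : Cauchy_crit (fun n => dist b (s n) (t n))) by (destruct (R_complete _ Hc) as [l Hl]; exists l; exact Hl).
  intros e He. destruct (Hs (e/2)) as [N1 H1]; [lra|]. destruct (Ht (e/2)) as [N2 H2]; [lra|].
  exists (max N1 N2). intros n k Hn Hk. unfold R_dist.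
  pose proof (dist_triangle (s n) (s k) (t n)). pose proof (dist_triangle (s k) (t k) (t n)).
  pose proof (dist_triangle (s k) (s n) (t k)). pose proof (dist_triangle (s n) (t n) (t k)).
  pose proof (H1 n k ltac:(lia) ltac:(lia)). pose proof (H1 k n ltac:(lia) ltac:(lia)).
  pose proof (H2 n k ltac:(lia) ltac:(lia)). pose proof (H2 k n ltac:(lia) ltac:(lia)).
  apply Rabs_def1; lra.
Qed.

Lemma cauchy_const x : cauchy b (fun _ => x).
Proof. intros e He; exists 0%nat; intros; rewrite dist_refl; auto. Qed.

Lemma vinf_avoid_pt s x : Vinf_pt b s -> exists N, forall n, (N <= n)%nat -> s n <> x.
Proof.
  intros [Hs Hv]. apply NNPP; intros Hn. apply Hv. exists x.
  intros e He. destruct (Hs e He) as [N HN]. exists N. intros n Hnn. unfold R_dist.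
  assert (exists k, (N <= k)%nat /\ s k = x) as [k [Hk <-]].
  { apply NNPP; intros Hk. apply Hn. exists N. intros k Hk1 Hk2. apply Hk; exists k; auto. }
  rewrite Rminus_0_r, Rabs_right by (apply Rle_ge, dist_nonneg). apply HN; lia.
Qed.

Lemma vinf_avoid s l : Vinf_pt b s -> exists N, forall n, (N <= n)%nat -> ~ In (s n) l.
Proof.
  intros Hv. induction l as [|x l [N1 H1]]; [exists 0%nat; simpl; auto|].
  destruct (vinf_avoid_pt s x Hv) as [N2 H2].
  exists (max N1 N2). intros n Hn [H|H]; [apply (H2 n); [lia|auto]|apply (H1 n); [lia|auto]].
Qed.
End PathMetric.

(** * The Neumann form on a graph

    All the estimates on
    the form are obtained term by term from pointwise inequalities. *)

Definition edge_term {V : Type} (b : V -> V -> R) (u : V -> Cpx) (p : V * V) : R :=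
  b (fst p) (snd p) * Cmod2 (Csub (u (fst p)) (u (snd p))).
Definition kill_term {V : Type} (c : V -> R) (u : V -> Cpx) (x : V) : R := c x * Cmod2 (u x).
Definition mass_term {V : Type} (m : V -> R) (u : V -> Cpx) (x : V) : R := Cmod2 (u x) * m x.

Definition NQ {V : Type} (m : V -> R) (b : V -> V -> R) (c : V -> R) (u : V -> Cpx) : R :=
  sqrt (QN_norm2 m b c u).

(** If [X <= (1 + t) a^2 + (1 + 1/t) b^2] for all [t > 0], then
    [X <= (a + b)^2]; this turns the weighted parallelogram inequality into
    the triangle inequality for [NQ]. *)
Lemma le_sq_of_weighted X a z : 0 <= a -> 0 <= z ->
  (forall t, t > 0 -> X <= (1 + t) * (a * a) + (1 + / t) * (z * z)) -> X <= (a + z) * (a + z).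
Proof.
  intros Ha Hz H. apply le_of_eps; intros e He.
  set (d := e / (2 * (a + z + 1))).
  assert (Hd : d > 0) by (unfold d; apply Rdiv_lt_0_compat; lra).
  specialize (H ((z + d) / (a + d)) ltac:(apply Rdiv_lt_0_compat; lra)).
  replace (1 + (z + d) / (a + d)) with ((a + z + 2 * d) / (a + d)) in H by (field; lra).
  replace (1 + / ((z + d) / (a + d))) with ((a + z + 2 * d) / (z + d)) in H by (field; lra).
  assert (Ka : a * a / (a + d) <= a) by (apply (Rmult_le_reg_r (a + d)); [lra|]; field_simplify; nra).
  assert (Kz : z * z / (z + d) <= z) by (apply (Rmult_le_reg_r (z + d)); [lra|]; field_simplify; nra).
  assert (X <= (a + z + 2 * d) * (a + z)).
  { eapply Rle_trans; [exact H|].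
    replace ((a + z + 2 * d) / (a + d) * (a * a) + (a + z + 2 * d) / (z + d) * (z * z))
      with ((a + z + 2 * d) * (a * a / (a + d) + z * z / (z + d))) by (field; lra).
    apply Rmult_le_compat_l; lra. }
  assert (2 * d * (a + z) < e).
  { unfold d. apply (Rmult_lt_reg_r (2 * (a + z + 1))); [lra|]. field_simplify; nra. }
  nra.
Qed.

Section Form.
Context {V : Type} (m : V -> R) (b : V -> V -> R) (c : V -> R).
Hypothesis Hg : is_graph m b c.

Lemma m_pos x : 0 < m x.
Proof. apply Hg. Qed.
Lemma c_nonneg x : 0 <= c x.
Proof. apply Hg. Qed.
Lemma b_nonneg x y : 0 <= b x y.
Proof. apply Hg. Qed.
Lemma b_diag x : b x x = 0.
Proof. apply Hg. Qed.
Lemma b_sym x y : b x y = b y x.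
Proof. apply Hg. Qed.
Lemma deg_summable x : nn_summable (b x).
Proof. apply Hg. Qed.

Lemma edge_term_nonneg u p : 0 <= edge_term b u p.
Proof. apply Rmult_le_pos; [apply b_nonneg|apply Cmod2_nonneg]. Qed.
Lemma kill_term_nonneg u x : 0 <= kill_term c u x.
Proof. apply Rmult_le_pos; [apply c_nonneg|apply Cmod2_nonneg]. Qed.
Lemma mass_term_nonneg u x : 0 <= mass_term m u x.
Proof. apply Rmult_le_pos; [apply Cmod2_nonneg|apply Rlt_le, m_pos]. Qed.

Lemma in_DN_terms u : in_DN m b c u <->
  nn_summable (mass_term m u) /\ nn_summable (edge_term b u) /\ nn_summable (kill_term c u).
Proof. reflexivity. Qed.

Lemma QN_norm2_terms u :
  QN_norm2 m b c u = / 2 * nnsum (edge_term b u) + nnsum (kill_term c u) + nnsum (mass_term m u).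
Proof. reflexivity. Qed.

Lemma QN_nonneg u : in_DN m b c u -> 0 <= QN_norm2 m b c u.
Proof.
  intros Hu. destruct (proj1 (in_DN_terms u) Hu) as [S3 [S1 S2]]. rewrite QN_norm2_terms.
  pose proof (nnsum_nonneg _ S1); pose proof (nnsum_nonneg _ S2); pose proof (nnsum_nonneg _ S3). lra.
Qed.

Lemma DN_ext u v : (forall x, u x = v x) -> in_DN m b c u -> in_DN m b c v.
Proof. intros H. replace v with u; auto. apply functional_extensionality; auto. Qed.

Lemma QN_ext u v : (forall x, u x = v x) -> QN_norm2 m b c u = QN_norm2 m b c v.
Proof. intros H. replace v with u; auto. apply functional_extensionality; auto. Qed.

Lemma QN_comparison (u v w : V -> Cpx) al be :
  in_DN m b c u -> in_DN m b c v -> 0 <= al -> 0 <= be ->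
  (forall x y, Cmod2 (Csub (w x) (w y)) <= al * Cmod2 (Csub (u x) (u y)) + be * Cmod2 (Csub (v x) (v y))) ->
  (forall x, Cmod2 (w x) <= al * Cmod2 (u x) + be * Cmod2 (v x)) ->
  in_DN m b c w /\ QN_norm2 m b c w <= al * QN_norm2 m b c u + be * QN_norm2 m b c v.
Proof.
  intros [U3 [U1 U2]] [V3 [V1 V2]] Ha Hb HD HP.
  destruct (nn_lin _ _ al be Ha Hb (edge_term_nonneg u) (edge_term_nonneg v) U1 V1) as [S1 Q1].
  destruct (nn_lin _ _ al be Ha Hb (kill_term_nonneg u) (kill_term_nonneg v) U2 V2) as [S2 Q2].
  destruct (nn_lin _ _ al be Ha Hb (mass_term_nonneg u) (mass_term_nonneg v) U3 V3) as [S3 Q3].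
  destruct (nnsum_mono (edge_term b w) _ S1) as [W1 L1].
  { intros p; unfold edge_term. pose proof (b_nonneg (fst p) (snd p)).
    specialize (HD (fst p) (snd p)). nra. }
  destruct (nnsum_mono (kill_term c w) _ S2) as [W2 L2].
  { intros x; unfold kill_term. pose proof (c_nonneg x). specialize (HP x). nra. }
  destruct (nnsum_mono (mass_term m w) _ S3) as [W3 L3].
  { intros x; unfold mass_term. pose proof (m_pos x). specialize (HP x). nra. }
  split; [repeat split; auto|]. rewrite !QN_norm2_terms. lra.
Qed.

Lemma QN_combination_eq (u v w1 w2 : V -> Cpx) al be :
  in_DN m b c u -> in_DN m b c v -> in_DN m b c w1 -> in_DN m b c w2 -> 0 <= al -> 0 <= be ->
  (forall x y, Cmod2 (Csub (w1 x) (w1 y)) + Cmod2 (Csub (w2 x) (w2 y))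
               = al * Cmod2 (Csub (u x) (u y)) + be * Cmod2 (Csub (v x) (v y))) ->
  (forall x, Cmod2 (w1 x) + Cmod2 (w2 x) = al * Cmod2 (u x) + be * Cmod2 (v x)) ->
  QN_norm2 m b c w1 + QN_norm2 m b c w2 = al * QN_norm2 m b c u + be * QN_norm2 m b c v.
Proof.
  intros [U3 [U1 U2]] [V3 [V1 V2]] [A3 [A1 A2]] [B3 [B1 B2]] Ha Hb HD HP.
  destruct (nn_lin _ _ al be Ha Hb (edge_term_nonneg u) (edge_term_nonneg v) U1 V1) as [_ Q1].
  destruct (nn_lin _ _ al be Ha Hb (kill_term_nonneg u) (kill_term_nonneg v) U2 V2) as [_ Q2].
  destruct (nn_lin _ _ al be Ha Hb (mass_term_nonneg u) (mass_term_nonneg v) U3 V3) as [_ Q3].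
  destruct (nn_lin _ _ 1 1 ltac:(lra) ltac:(lra) (edge_term_nonneg w1) (edge_term_nonneg w2) A1 B1) as [_ R1].
  destruct (nn_lin _ _ 1 1 ltac:(lra) ltac:(lra) (kill_term_nonneg w1) (kill_term_nonneg w2) A2 B2) as [_ R2].
  destruct (nn_lin _ _ 1 1 ltac:(lra) ltac:(lra) (mass_term_nonneg w1) (mass_term_nonneg w2) A3 B3) as [_ R3].
  rewrite (nnsum_ext _ (fun p => al * edge_term b u p + be * edge_term b v p)) in R1
    by (intros p; unfold edge_term; specialize (HD (fst p) (snd p)); nra).
  rewrite (nnsum_ext _ (fun x => al * kill_term c u x + be * kill_term c v x)) in R2
    by (intros x; unfold kill_term; specialize (HP x); nra).
  rewrite (nnsum_ext _ (fun x => al * mass_term m u x + be * mass_term m v x)) in R3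
    by (intros x; unfold mass_term; specialize (HP x); nra).
  rewrite !QN_norm2_terms. lra.
Qed.

Lemma DN_zero : in_DN m b c (fun _ => C0) /\ QN_norm2 m b c (fun _ => C0) = 0.
Proof.
  assert (Z : forall T, nn_summable (fun _ : T => 0) /\ nnsum (fun _ : T => 0) = 0).
  { intros T. destruct (nn_bound (fun _ : T => 0) 0) as [S H].
    - intros l _. rewrite fin_sum_zero; auto; lra.
    - split; auto. pose proof (nnsum_nonneg _ S). lra. }
  assert (E1 : forall p, edge_term b (fun _ => C0) p = 0)
    by (intros; unfold edge_term; replace (Csub C0 C0) with C0 by cpx_ring; rewrite Cmod2_C0; ring).
  assert (E2 : forall x, kill_term c (fun _ => C0) x = 0) by (intros; unfold kill_term; rewrite Cmod2_C0; ring).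
  assert (E3 : forall x, mass_term m (fun _ => C0) x = 0) by (intros; unfold mass_term; rewrite Cmod2_C0; ring).
  destruct (Z V) as [ZV ZV']. destruct (Z (V * V)%type) as [ZP ZP'].
  split; [apply in_DN_terms; repeat split|].
  - apply (nn_summable_ext (fun _ : V => 0)); [intros; rewrite E3; auto|exact ZV].
  - apply (nn_summable_ext (fun _ : V * V => 0)); [intros; rewrite E1; auto|exact ZP].
  - apply (nn_summable_ext (fun _ : V => 0)); [intros; rewrite E2; auto|exact ZV].
  - rewrite QN_norm2_terms, (nnsum_ext _ _ E1), (nnsum_ext _ _ E2), (nnsum_ext _ _ E3), ZV', ZP'. ring.
Qed.

Lemma DN_comb u v al be : in_DN m b c u -> in_DN m b c v ->
  in_DN m b c (fun x => Cadd (Cmul al (u x)) (Cmul be (v x))).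
Proof.
  intros Hu Hv. pose proof (Cmod2_nonneg al); pose proof (Cmod2_nonneg be).
  apply (QN_comparison u v _ (2 * Cmod2 al) (2 * Cmod2 be)); auto; try lra.
  - intros x y. replace (Csub (Cadd (Cmul al (u x)) (Cmul be (v x))) (Cadd (Cmul al (u y)) (Cmul be (v y))))
      with (Cadd (Cmul al (Csub (u x) (u y))) (Cmul be (Csub (v x) (v y)))) by cpx_ring.
    eapply Rle_trans; [apply (Cmod2_add_le _ _ 1); lra|]. rewrite !Cmod2_mul, Rinv_1. lra.
  - intros x. eapply Rle_trans; [apply (Cmod2_add_le _ _ 1); lra|]. rewrite !Cmod2_mul, Rinv_1. lra.
Qed.

Lemma DN_add u v : in_DN m b c u -> in_DN m b c v -> in_DN m b c (fun x => Cadd (u x) (v x)).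
Proof.
  intros Hu Hv. eapply DN_ext; [|apply (DN_comb u v (1,0) (1,0) Hu Hv)]. intros x; cpx_ring.
Qed.

Lemma DN_sub u v : in_DN m b c u -> in_DN m b c v -> in_DN m b c (fsub u v).
Proof.
  intros Hu Hv. eapply DN_ext; [|apply (DN_comb u v (1,0) (-1,0) Hu Hv)]. intros x; cpx_ring.
Qed.

Lemma QN_scal u al : in_DN m b c u ->
  in_DN m b c (fun x => Cmul al (u x)) /\
  QN_norm2 m b c (fun x => Cmul al (u x)) = Cmod2 al * QN_norm2 m b c u.
Proof.
  intros Hu. destruct DN_zero as [Z1 Z2].
  assert (H : in_DN m b c (fun x => Cmul al (u x))).
  { eapply DN_ext; [|apply (DN_comb u u al (0,0) Hu Hu)]. intros x; cpx_ring. }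
  split; auto.
  pose proof (QN_combination_eq u u _ _ (Cmod2 al) 0 Hu Hu H Z1 (Cmod2_nonneg al) (Rle_refl 0)) as HH.
  rewrite Z2 in HH. rewrite <- (Rplus_0_r (QN_norm2 m b c _)), HH; [ring| |].
  - intros x y. replace (Csub (Cmul al (u x)) (Cmul al (u y))) with (Cmul al (Csub (u x) (u y))) by cpx_ring.
    replace (Csub C0 C0) with C0 by cpx_ring. rewrite Cmod2_mul, Cmod2_C0. ring.
  - intros x. rewrite Cmod2_mul, Cmod2_C0. ring.
Qed.

Lemma QN_sub_sym u v : in_DN m b c u -> in_DN m b c v ->
  QN_norm2 m b c (fsub u v) = QN_norm2 m b c (fsub v u).
Proof.
  intros Hu Hv. destruct (QN_scal (fsub u v) (-1, 0) (DN_sub u v Hu Hv)) as [_ H].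
  replace (Cmod2 (-1, 0)) with 1 in H by (unfold Cmod2, Rsqr; simpl; ring).
  rewrite Rmult_1_l in H. rewrite <- H. apply QN_ext. intros x. cpx_ring.
Qed.

Lemma NQ_nonneg u : 0 <= NQ m b c u.
Proof. apply sqrt_pos. Qed.

Lemma NQ_sq u : in_DN m b c u -> NQ m b c u * NQ m b c u = QN_norm2 m b c u.
Proof. intros H. apply sqrt_sqrt, QN_nonneg; auto. Qed.

Lemma NQ_add_le u v : in_DN m b c u -> in_DN m b c v ->
  NQ m b c (fun x => Cadd (u x) (v x)) <= NQ m b c u + NQ m b c v.
Proof.
  intros Hu Hv. pose proof (NQ_nonneg u); pose proof (NQ_nonneg v).
  rewrite <- (sqrt_square (NQ m b c u + NQ m b c v)) by lra. apply sqrt_le_1_alt.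
  apply le_sq_of_weighted; auto. intros t Ht. rewrite !NQ_sq by auto.
  assert (0 < / t) by (apply Rinv_0_lt_compat; lra).
  apply (QN_comparison u v _ (1 + t) (1 + / t)); auto; try lra.
  - intros x y. replace (Csub (Cadd (u x) (v x)) (Cadd (u y) (v y)))
      with (Cadd (Csub (u x) (u y)) (Csub (v x) (v y))) by cpx_ring. apply Cmod2_add_le; auto.
  - intros x. apply Cmod2_add_le; auto.
Qed.

Lemma QN_ge_mass u x : in_DN m b c u -> Cmod2 (u x) * m x <= QN_norm2 m b c u.
Proof.
  intros Hu. destruct (proj1 (in_DN_terms u) Hu) as [S3 [S1 S2]]. rewrite QN_norm2_terms.
  pose proof (nnsum_nonneg _ S1); pose proof (nnsum_nonneg _ S2).
  pose proof (nnsum_ge _ [x] S3 ltac:(repeat constructor; auto)). simpl in H1. unfold mass_term in *. lra.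
Qed.

(** The edge [{x, y}] contributes twice (as [(x, y)] and [(y, x)]) to the
    halved edge sum. *)
Lemma QN_ge_edge u x y : in_DN m b c u -> b x y * Cmod2 (Csub (u x) (u y)) <= QN_norm2 m b c u.
Proof.
  intros Hu. destruct (proj1 (in_DN_terms u) Hu) as [S3 [S1 S2]]. rewrite QN_norm2_terms.
  pose proof (nnsum_nonneg _ S3); pose proof (nnsum_nonneg _ S2); pose proof (nnsum_nonneg _ S1).
  destruct (classic (x = y)) as [->|Hne]; [rewrite b_diag; lra|].
  assert (Hnd : NoDup [(x, y); (y, x)]).
  { repeat constructor; simpl; intuition congruence. }
  pose proof (nnsum_ge _ _ S1 Hnd). simpl in H2. unfold edge_term at 1 2 in H2; simpl in H2.
  rewrite (b_sym y x), (Cmod2_sub_sym (u y)) in H2. lra.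
Qed.


Lemma QN_parallelogram u v : in_DN m b c u -> in_DN m b c v ->
  QN_norm2 m b c (fsub u v) + QN_norm2 m b c (fun x => Cadd (u x) (v x))
  = 2 * QN_norm2 m b c u + 2 * QN_norm2 m b c v.
Proof.
  intros Hu Hv. apply QN_combination_eq; auto; try lra.
  - apply DN_sub; auto.
  - apply DN_add; auto.
  - intros x y. unfold fsub, Cmod2, Csub, Cadd, Copp, Rsqr; simpl; ring.
  - intros x. unfold fsub, Cmod2, Csub, Cadd, Copp, Rsqr; simpl; ring.
Qed.

Lemma QN_cv_of_close u (v : nat -> V -> Cpx) : in_DN m b c u -> (forall n, in_DN m b c (v n)) ->
  Un_cv (fun n => QN_norm2 m b c (fsub (v n) u)) 0 -> Un_cv (fun n => QN_norm2 m b c (v n)) (QN_norm2 m b c u).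
Proof.
  intros Hu Hv Hcv.
  assert (Hd : forall n, in_DN m b c (fsub (v n) u)) by (intros n; apply DN_sub; auto).
  assert (Hd' : forall n, in_DN m b c (fsub u (v n))) by (intros n; apply DN_sub; auto).
  assert (Upper : forall n, NQ m b c (v n) <= NQ m b c u + NQ m b c (fsub (v n) u)).
  { intros n. unfold NQ at 1. rewrite (QN_ext (v n) (fun x => Cadd (u x) (fsub (v n) u x))) by (intros x; cpx_ring).
    apply NQ_add_le; auto. }
  assert (Lower : forall n, NQ m b c u <= NQ m b c (v n) + NQ m b c (fsub (v n) u)).
  { intros n. unfold NQ at 1. rewrite (QN_ext u (fun x => Cadd (v n x) (fsub u (v n) x))) by (intros x; cpx_ring).
    replace (NQ m b c (fsub (v n) u)) with (NQ m b c (fsub u (v n))) by (unfold NQ; rewrite QN_sub_sym; auto).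
    apply NQ_add_le; auto. }
  assert (Hsmall : Un_cv (fun n => NQ m b c (fsub (v n) u)) 0).
  { intros e He. destruct (Hcv (e * e)) as [N HN]; [nra|]. exists N. intros n Hn. specialize (HN n Hn).
    unfold R_dist in *. rewrite Rminus_0_r in *. pose proof (NQ_nonneg (fsub (v n) u)).
    rewrite Rabs_right in * by (try apply Rle_ge, QN_nonneg; auto; lra).
    unfold NQ. rewrite <- (sqrt_square e) by lra. apply sqrt_lt_1_alt. split; [apply QN_nonneg; auto|lra]. }
  assert (HNQ : Un_cv (fun n => NQ m b c (v n)) (NQ m b c u)).
  { intros e He. destruct (Hsmall e He) as [N HN]. exists N. intros n Hn. specialize (HN n Hn).
    specialize (Upper n). specialize (Lower n). unfold R_dist in *. rewrite Rminus_0_r in HN.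
    pose proof (NQ_nonneg (fsub (v n) u)). rewrite Rabs_right in HN by lra. apply Rabs_def1; lra. }
  rewrite <- NQ_sq by auto. apply (Un_cv_ext (fun n => NQ m b c (v n) * NQ m b c (v n))).
  - intros n. apply NQ_sq; auto.
  - apply CV_mult; auto.
Qed.
End Form.

Lemma nnsum_triple_bound {A B : Type} (f1 : A -> R) (f2 f3 : B -> R) e :
  (forall x, 0 <= f1 x) -> (forall x, 0 <= f2 x) -> (forall x, 0 <= f3 x) ->
  (forall l1 l2 l3, NoDup l1 -> NoDup l2 -> NoDup l3 ->
     / 2 * fin_sum f1 l1 + fin_sum f2 l2 + fin_sum f3 l3 <= e) ->
  nn_summable f1 /\ nn_summable f2 /\ nn_summable f3 /\ / 2 * nnsum f1 + nnsum f2 + nnsum f3 <= e.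
Proof.
  intros H1 H2 H3 H.
  assert (S1 : nn_summable f1).
  { apply (nn_bound f1 (2 * e)). intros l Hl.
    pose proof (H l [] [] Hl (NoDup_nil _) (NoDup_nil _)). simpl in H0. lra. }
  assert (S2 : nn_summable f2).
  { apply (nn_bound f2 e). intros l Hl.
    pose proof (H [] l [] (NoDup_nil _) Hl (NoDup_nil _)). simpl in H0. lra. }
  assert (S3 : nn_summable f3).
  { apply (nn_bound f3 e). intros l Hl.
    pose proof (H [] [] l (NoDup_nil _) (NoDup_nil _) Hl). simpl in H0. lra. }
  repeat split; auto. apply le_of_eps; intros eta He.
  destruct (nnsum_approx f1 (eta/2) S1) as [l1 [N1 K1]]; [lra|].
  destruct (nnsum_approx f2 (eta/4) S2) as [l2 [N2 K2]]; [lra|].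
  destruct (nnsum_approx f3 (eta/4) S3) as [l3 [N3 K3]]; [lra|].
  specialize (H l1 l2 l3 N1 N2 N3). lra.
Qed.

(** * Completeness of [D(Q^(N))] *)

Section Completeness.
Context {V : Type} (m : V -> R) (b : V -> V -> R) (c : V -> R).
Hypothesis Hg : is_graph m b c.

Lemma QN_fatou (h : nat -> V -> Cpx) (hl : V -> Cpx) e N :
  (forall k, in_DN m b c (h k)) -> (forall x, C_cv (fun k => h k x) (hl x)) ->
  (forall k, (N <= k)%nat -> QN_norm2 m b c (h k) <= e) ->
  in_DN m b c hl /\ QN_norm2 m b c hl <= e.
Proof.
  intros Hh Hcv Hle.
  destruct (nnsum_triple_bound (edge_term b hl) (kill_term c hl) (mass_term m hl) e
    (edge_term_nonneg m b c Hg hl) (kill_term_nonneg m b c Hg hl) (mass_term_nonneg m b c Hg hl))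
    as [S1 [S2 [S3 Hsum]]]; [|split; [apply in_DN_terms; auto|rewrite QN_norm2_terms; lra]].
  intros l1 l2 l3 N1 N2 N3.
  set (F := fun k => / 2 * fin_sum (edge_term b (h k)) l1 + fin_sum (kill_term c (h k)) l2
                     + fin_sum (mass_term m (h k)) l3).
  apply (Un_cv_le F _ e N).
  - unfold F. apply CV_plus; [apply CV_plus|]; [apply CV_mult; [apply Un_cv_const|]| |];
      apply fin_sum_cv; intros p.
    + apply CV_mult; [apply Un_cv_const|]. apply C_cv_Cmod2, C_cv_sub; auto.
    + apply CV_mult; [apply Un_cv_const|]. apply C_cv_Cmod2; auto.
    + apply CV_mult; [|apply Un_cv_const]. apply C_cv_Cmod2; auto.
  - intros k Hk. specialize (Hle k Hk). unfold F.
    destruct (proj1 (in_DN_terms m b c (h k)) (Hh k)) as [T3 [T1 T2]].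
    pose proof (nnsum_ge _ l1 T1 N1). pose proof (nnsum_ge _ l2 T2 N2). pose proof (nnsum_ge _ l3 T3 N3).
    rewrite QN_norm2_terms in Hle. lra.
Qed.

(** [D(Q^(N))] with the form norm is complete: a form-Cauchy sequence
    converges pointwise (the mass term controls point values) and, by
    Fatou, in form norm. *)
Theorem DN_complete (g : nat -> V -> Cpx) : (forall n, in_DN m b c (g n)) ->
  (forall e, e > 0 -> exists N, forall n k, (N <= n)%nat -> (N <= k)%nat ->
     QN_norm2 m b c (fsub (g n) (g k)) < e) ->
  exists w, in_DN m b c w /\ Un_cv (fun n => QN_norm2 m b c (fsub (g n) w)) 0.
Proof.
  intros Hg0 Hcau.
  assert (Hpt : forall x, exists z, C_cv (fun n => g n x) z).
  { intros x. apply C_cauchy_cv. intros e He. pose proof (m_pos m b c Hg x) as Hm.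
    destruct (Hcau ((e * e) * m x)) as [N HN]; [apply Rmult_lt_0_compat; nra|].
    exists N. intros n k Hn Hk. specialize (HN n k Hn Hk).
    pose proof (QN_ge_mass m b c (fsub (g n) (g k)) x (DN_sub m b c Hg _ _ (Hg0 n) (Hg0 k))) as H.
    assert (Cmod2 (Csub (g n x) (g k x)) < e * e) by (apply (Rmult_lt_reg_r (m x)); auto; change (fsub (g n) (g k) x) with (Csub (g n x) (g k x)) in H; lra).
    pose proof (Cnorm_nonneg (Csub (g n x) (g k x))). rewrite <- Cnorm_sq in H0. nra. }
  set (w := fun x => epsilon (inhabits C0) (fun z => C_cv (fun n => g n x) z)).
  assert (Hw : forall x, C_cv (fun n => g n x) (w x)) by (intros x; unfold w; apply epsilon_spec, Hpt).
  assert (Tail : forall e, e > 0 -> exists N, forall n, (N <= n)%nat ->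
                   in_DN m b c (fsub (g n) w) /\ QN_norm2 m b c (fsub (g n) w) <= e).
  { intros e He. destruct (Hcau e He) as [N HN]. exists N. intros n Hn.
    apply (QN_fatou (fun k => fsub (g n) (g k)) _ e N).
    - intros k. apply (DN_sub m b c Hg); auto.
    - intros x. apply C_cv_sub; [apply C_cv_const|auto].
    - intros k Hk. left; apply HN; auto. }
  destruct (Tail 1 ltac:(lra)) as [N0 HN0]. destruct (HN0 N0 (le_n _)) as [HD0 _].
  exists w. split.
  - eapply (DN_ext m b c); [|apply (DN_sub m b c Hg _ _ (Hg0 N0) HD0)]. intros x; cpx_ring.
  - intros e He. destruct (Tail (e/2) ltac:(lra)) as [N HN]. exists N. intros n Hn.
    destruct (HN n Hn) as [H1 H2]. unfold R_dist. rewrite Rminus_0_r.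
    pose proof (QN_nonneg m b c _ H1). rewrite Rabs_right; lra.
Qed.
End Completeness.

(** * Pointwise control by the form norm and boundary values *)

Definition ind (P : Prop) : R := if dec P then 1 else 0.
Definition cind {V : Type} (x0 : V) (z : Cpx) : V -> Cpx := fun x => if dec (x = x0) then z else C0.

Lemma ind_nonneg P : 0 <= ind P.
Proof. unfold ind; destruct (dec P); lra. Qed.

Lemma Cmod2_cind {V : Type} (x0 x : V) z : Cmod2 (cind x0 z x) = ind (x = x0) * Cmod2 z.
Proof. unfold cind, ind. destruct (dec (x = x0)); [ring|rewrite Cmod2_C0; ring]. Qed.

Section Boundary.
Context {V : Type} (m : V -> R) (b : V -> V -> R) (c : V -> R).
Hypotheses (Hg : is_graph m b c) (Hconn : connected b).

Lemma DN_lipschitz u x y : in_DN m b c u -> Cnorm (Csub (u x) (u y)) <= NQ m b c u * dist b x y.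
Proof.
  intros Hu. apply lipschitz_dist; auto; [apply NQ_nonneg|].
  intros x' y' Hb. pose proof (QN_ge_edge m b c Hg u x' y' Hu).
  unfold Cnorm, NQ. rewrite <- sqrt_inv, <- sqrt_mult_alt by (apply (QN_nonneg m b c); auto).
  apply sqrt_le_1_alt. apply (Rmult_le_reg_l (b x' y')); auto.
  replace (b x' y' * (QN_norm2 m b c u * / b x' y')) with (QN_norm2 m b c u) by (field; lra). lra.
Qed.

Lemma DN_value u x : in_DN m b c u -> Cnorm (u x) <= NQ m b c u * / sqrt (m x).
Proof.
  intros Hu. pose proof (QN_ge_mass m b c u x Hu). pose proof (m_pos m b c Hg x).
  unfold Cnorm, NQ. rewrite <- sqrt_inv, <- sqrt_mult_alt by (apply (QN_nonneg m b c); auto).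
  apply sqrt_le_1_alt. apply (Rmult_le_reg_r (m x)); auto.
  replace (QN_norm2 m b c u * / m x * m x) with (QN_norm2 m b c u) by (field; lra). lra.
Qed.

Lemma DN_value_near u x y : in_DN m b c u -> Cnorm (u y) <= NQ m b c u * (/ sqrt (m x) + dist b x y).
Proof.
  intros Hu. pose proof (DN_value u x Hu). pose proof (DN_lipschitz u x y Hu).
  pose proof (Cnorm_le_shift (u x) (u y)). nra.
Qed.

Lemma DN_bound_near s : cauchy b s -> exists K, K > 0 /\
  forall v t, in_DN m b c v -> cauchy b t -> dhat b s t < 1 ->
    exists N, forall n, (N <= n)%nat -> Cnorm (v (t n)) <= NQ m b c v * K.
Proof.
  intros Hs. destruct (Hs 1) as [N0 HN0]; [lra|]. set (x0 := s N0).
  exists (/ sqrt (m x0) + 3). split; [pose proof (inv_sqrt_nonneg (m x0)); lra|].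
  intros v t Hv Ht Hd.
  destruct (dhat_spec b Hconn s t Hs Ht (1 - dhat b s t)) as [N1 HN1]; [lra|].
  exists (max N0 N1). intros n Hn. eapply Rle_trans; [apply (DN_value_near v x0); auto|].
  apply Rmult_le_compat_l; [apply NQ_nonneg|].
  specialize (HN0 N0 n (le_n _) ltac:(lia)). specialize (HN1 n ltac:(lia)). unfold R_dist in HN1.
  apply Rabs_def2 in HN1. pose proof (dist_triangle b Hconn x0 (s n) (t n)). fold x0 in HN0. lra.
Qed.

Lemma dhat_self s : cauchy b s -> dhat b s s = 0.
Proof.
  intros Hs. apply (UL_sequence (fun n => dist b (s n) (s n))); [apply dhat_spec; auto|].
  apply (Un_cv_ext (fun _ => 0)); [intros n; rewrite dist_refl; auto|apply Un_cv_const].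
Qed.

Lemma deg_fiber_summable x0 (side : V * V -> V) (other : V * V -> V) (pair : V -> V * V) :
  (forall y, side (pair y) = x0) -> (forall p, side p = x0 -> pair (other p) = p) ->
  (forall y, other (pair y) = y) -> (forall y, b (fst (pair y)) (snd (pair y)) = b x0 y) ->
  nn_summable (fun p : V * V => ind (side p = x0) * b (fst p) (snd p)).
Proof.
  intros H1 H2 H3 H4.
  apply (nn_summable_reindex _ pair other (fun p => side p = x0)); auto.
  - intros p Hp. unfold ind. rewrite (dec_false Hp). ring.
  - intros p. apply Rmult_le_pos; [apply ind_nonneg|apply (b_nonneg m b c Hg)].
  - apply (nn_summable_ext (b x0)); [|apply (deg_summable m b c Hg)].
    intros y. unfold ind. rewrite H1, (dec_true (eq_refl x0)), H4. ring.
Qed.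

Lemma DN_cind x0 z : in_DN m b c (cind x0 z).
Proof.
  assert (Hsupp : forall x, x <> x0 -> cind x0 z x = C0) by (intros x Hx; unfold cind; rewrite (dec_false Hx); auto).
  apply in_DN_terms. split; [|split].
  - apply (nn_summable_supp _ [x0]); [apply (mass_term_nonneg m b c Hg)|].
    intros x Hx. unfold mass_term. rewrite Hsupp, Cmod2_C0; [ring|]. intros ->; apply Hx; left; auto.
  - pose proof (Cmod2_nonneg z).
    destruct (nn_lin _ _ (2 * Cmod2 z) (2 * Cmod2 z) ltac:(lra) ltac:(lra)
      (fun p => Rmult_le_pos _ _ (ind_nonneg _) (b_nonneg m b c Hg _ _))
      (fun p => Rmult_le_pos _ _ (ind_nonneg _) (b_nonneg m b c Hg _ _))
      (deg_fiber_summable x0 fst snd (fun y => (x0, y)) (fun _ => eq_refl)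
         ltac:(intros [p1 p2]; simpl; intros ->; auto) (fun _ => eq_refl) (fun _ => eq_refl))
      (deg_fiber_summable x0 snd fst (fun y => (y, x0)) (fun _ => eq_refl)
         ltac:(intros [p1 p2]; simpl; intros ->; auto) (fun _ => eq_refl) (fun y => b_sym m b c Hg y x0)))
      as [S _].
    apply (nn_summable_mono _ _ S). intros p. unfold edge_term.
    pose proof (Cmod2_sub_le2 (cind x0 z (fst p)) (cind x0 z (snd p))). rewrite !Cmod2_cind in H0.
    pose proof (b_nonneg m b c Hg (fst p) (snd p)). nra.
  - apply (nn_summable_supp _ [x0]); [apply (kill_term_nonneg m b c Hg)|].
    intros x Hx. unfold kill_term. rewrite Hsupp, Cmod2_C0; [ring|]. intros ->; apply Hx; left; auto.
Qed.

Lemma DN_fin_supp u : fin_supp u -> in_DN m b c u.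
Proof.
  intros [l Hl]. revert u Hl. induction l as [|a l IH]; intros u Hu.
  - eapply DN_ext; [|apply (DN_zero m b c)]. intros x; symmetry; apply Hu; simpl; auto.
  - set (u' := fun x => if dec (x = a) then C0 else u x).
    assert (Hu' : in_DN m b c u').
    { apply IH. intros x Hx. unfold u'. destruct (dec (x = a)) eqn:E; auto.
      apply Hu. intros [H|H]; [apply (decN E); auto|auto]. }
    eapply DN_ext; [|apply (DN_add m b c Hg _ _ (DN_cind a (u a)) Hu')].
    intros x. unfold u', cind. destruct (dec (x = a)) eqn:E; [apply decP in E; subst|]; cpx_ring.
Qed.

Lemma bval_spec u s : in_DN m b c u -> cauchy b s -> C_cv (fun n => u (s n)) (bval u s).
Proof.
  intros Hu Hs. unfold bval. apply epsilon_spec, C_cauchy_cv.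
  intros e He. pose proof (NQ_nonneg m b c u).
  destruct (Hs (e / (NQ m b c u + 1))) as [N HN]; [apply Rdiv_lt_0_compat; lra|].
  exists N; intros n k Hn Hk. eapply Rle_lt_trans; [apply (DN_lipschitz u); auto|].
  specialize (HN n k Hn Hk). pose proof (dist_nonneg b Hconn (s n) (s k)).
  apply Rle_lt_trans with ((NQ m b c u + 1) * dist b (s n) (s k)); [nra|].
  apply (Rmult_lt_compat_l (NQ m b c u + 1)) in HN; [|lra]. field_simplify in HN; lra.
Qed.

(** Well-definedness: elements of [D(Q^(D))] vanish on [V_infty], since
    they are approximated in form norm by finitely supported functions and
    a point at infinity eventually leaves every finite support. *)
Theorem DD_vanish_at_infinity u s : in_DD m b c u -> Vinf_pt b s -> C_cv (fun n => u (s n)) C0.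
Proof.
  intros [Hu HD] Hv. pose proof Hv as [Hs _].
  destruct (DN_bound_near s Hs) as [K [HK Hbd]].
  intros e He. destruct (HD ((e / K) * (e / K))) as [phi [[l Hl] Hphi]].
  { assert (e / K > 0) by (apply Rdiv_lt_0_compat; lra). nra. }
  assert (Hw : in_DN m b c (fsub u phi)) by (apply (DN_sub m b c Hg); auto; apply DN_fin_supp; exists l; auto).
  destruct (Hbd (fsub u phi) s Hw Hs ltac:(rewrite dhat_self; auto; lra)) as [N1 HN1].
  destruct (vinf_avoid b Hconn s l Hv) as [N2 HN2].
  exists (max N1 N2). intros n Hn. rewrite Csub_C0.
  replace (u (s n)) with (fsub u phi (s n)) by (unfold fsub; rewrite (Hl (s n)); [apply Csub_C0|apply HN2; lia]).
  eapply Rle_lt_trans; [apply HN1; lia|].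
  assert (NQ m b c (fsub u phi) < e / K).
  { unfold NQ. rewrite <- (sqrt_square (e/K)) by (apply Rlt_le, Rdiv_lt_0_compat; lra).
    apply sqrt_lt_1_alt. split; auto. apply (QN_nonneg m b c); auto. }
  apply (Rmult_lt_compat_r K) in H; auto. field_simplify in H; lra.
Qed.

Lemma bval_DD u s : in_DD m b c u -> Vinf_pt b s -> bval u s = C0.
Proof.
  intros Hu Hs. apply (C_cv_unique (fun n => u (s n))); [apply bval_spec; [apply Hu|apply Hs]|].
  apply DD_vanish_at_infinity; auto.
Qed.

Theorem bval_linear u v al be s : in_DN m b c u -> in_DN m b c v -> cauchy b s ->
  bval (fun x => Cadd (Cmul al (u x)) (Cmul be (v x))) s = Cadd (Cmul al (bval u s)) (Cmul be (bval v s)).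
Proof.
  intros Hu Hv Hs. apply (C_cv_unique (fun n => Cadd (Cmul al (u (s n))) (Cmul be (v (s n))))).
  - apply (bval_spec (fun x => Cadd (Cmul al (u x)) (Cmul be (v x)))); auto. apply (DN_comb m b c Hg); auto.
  - apply C_cv_lin; apply bval_spec; auto.
Qed.

Lemma bval_sub u v s : in_DN m b c u -> in_DN m b c v -> cauchy b s ->
  bval (fsub u v) s = Csub (bval u s) (bval v s).
Proof.
  intros Hu Hv Hs. apply (C_cv_unique (fun n => fsub u v (s n))).
  - apply bval_spec; auto. apply (DN_sub m b c Hg); auto.
  - apply C_cv_sub; apply bval_spec; auto.
Qed.

(** Continuity: convergence in the quotient norm of [D(Q^(N))/D(Q^(D))]
    implies uniform convergence of boundary values on a neighbourhood of
    each point at infinity. *)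
Theorem bval_continuous (un : nat -> V -> Cpx) (u : V -> Cpx) :
  (forall n, in_DN m b c (un n)) -> in_DN m b c u ->
  (exists wn : nat -> V -> Cpx, (forall n, in_DD m b c (wn n)) /\
     Un_cv (fun n => QN_norm2 m b c (fsub (fsub (un n) u) (wn n))) 0) ->
  forall s, Vinf_pt b s -> exists r, r > 0 /\
    forall eps, eps > 0 -> exists N, forall n, (N <= n)%nat ->
      forall t, Vinf_pt b t -> dhat b s t < r -> Cnorm (Csub (bval (un n) t) (bval u t)) <= eps.
Proof.
  intros Hun Hu [wn [Hwn Hcv]] s [Hs _].
  destruct (DN_bound_near s Hs) as [K [HK Hbd]].
  exists 1; split; [lra|]. intros eps He.
  destruct (Hcv ((eps / K) * (eps / K))) as [N HN].
  { assert (eps / K > 0) by (apply Rdiv_lt_0_compat; lra). nra. }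
  exists N. intros n Hn t [Ht Htinf] Hd.
  set (v := fsub (fsub (un n) u) (wn n)).
  assert (Hv : in_DN m b c v) by (apply (DN_sub m b c Hg); [apply (DN_sub m b c Hg); auto|apply Hwn]).
  assert (E : bval v t = Csub (bval (un n) t) (bval u t)).
  { assert (Hd1 : in_DN m b c (fsub (un n) u)) by (apply (DN_sub m b c Hg); auto).
    unfold v. rewrite (bval_sub _ _ _ Hd1 (proj1 (Hwn n)) Ht), (bval_DD (wn n) t (Hwn n) (conj Ht Htinf)).
    rewrite Csub_C0. apply bval_sub; auto. }
  rewrite <- E. destruct (Hbd v t Hv Ht Hd) as [N1 HN1].
  apply (C_cv_norm_le _ _ _ N1 (bval_spec v t Hv Ht)). intros k Hk. eapply Rle_trans; [apply HN1; auto|].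
  specialize (HN n Hn). unfold R_dist in HN. rewrite Rminus_0_r in HN. fold v in HN.
  assert (NQ m b c v <= eps / K).
  { unfold NQ. rewrite <- (sqrt_square (eps/K)) by (apply Rlt_le, Rdiv_lt_0_compat; lra).
    apply sqrt_le_1_alt. apply Rabs_def2 in HN. lra. }
  apply (Rmult_le_compat_r K) in H; [|lra]. field_simplify in H; lra.
Qed.
End Boundary.

(** * The harmonic representative: minimizing the form over [f + C_c(V)] *)

Lemma fin_supp_comb {V : Type} (u v : V -> Cpx) al be : fin_supp u -> fin_supp v ->
  fin_supp (fun x => Cadd (Cmul al (u x)) (Cmul be (v x))).
Proof.
  intros [l1 H1] [l2 H2]. exists (l1 ++ l2). intros x Hx.
  rewrite H1, H2; [cpx_ring| |]; intros Hin; apply Hx, in_app_iff; auto.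
Qed.

Section Minimizer.
Context {V : Type} (m : V -> R) (b : V -> V -> R) (c : V -> R).
Hypothesis Hg : is_graph m b c.
Variable f : V -> Cpx.
Hypothesis Hf : in_DN m b c f.

Definition approx_errors : R -> Prop :=
  fun r => exists phi, fin_supp phi /\ r = QN_norm2 m b c (fsub f phi).

Variable d : R.
Hypothesis Hd : is_glb approx_errors d.

Lemma DN_f_minus phi : fin_supp phi -> in_DN m b c (fsub f phi).
Proof. intros H. apply (DN_sub m b c Hg); auto. apply (DN_fin_supp m b c Hg); auto. Qed.

Lemma approx_error_ge phi : fin_supp phi -> d <= QN_norm2 m b c (fsub f phi).
Proof. intros Hp. apply Hd. exists phi; auto. Qed.

Lemma minimizing_sequence : exists phi : nat -> V -> Cpx, forall n,
  fin_supp (phi n) /\ QN_norm2 m b c (fsub f (phi n)) < d + / INR (S n).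
Proof.
  assert (Hap : forall n, exists psi, fin_supp psi /\ QN_norm2 m b c (fsub f psi) < d + / INR (S n)).
  { intros n. apply NNPP; intros Hn. assert (d + / INR (S n) <= d); [|pose proof (inv_S_pos n); lra].
    apply Hd. intros r [psi [Hpsi ->]]. apply Rnot_lt_le. intros Hl. apply Hn. exists psi; auto. }
  exists (fun n => epsilon (inhabits (fun _ : V => C0))
            (fun psi => fin_supp psi /\ QN_norm2 m b c (fsub f psi) < d + / INR (S n))).
  intros n. apply epsilon_spec, Hap.
Qed.

(** By the parallelogram law a minimizing sequence is form-Cauchy: the
    midpoint [f - (phi_n + phi_k)/2] is again an approximation error. *)
Lemma minimizing_cauchy (phi : nat -> V -> Cpx) :
  (forall n, fin_supp (phi n) /\ QN_norm2 m b c (fsub f (phi n)) < d + / INR (S n)) ->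
  forall n k, QN_norm2 m b c (fsub (fsub f (phi n)) (fsub f (phi k))) <= 2 * / INR (S n) + 2 * / INR (S k).
Proof.
  intros Hphi n k.
  set (g := fun j => fsub f (phi j)).
  set (psi := fun x => Cadd (Cmul (/ 2, 0) (phi n x)) (Cmul (/ 2, 0) (phi k x))).
  assert (Hpsi : fin_supp psi) by (apply fin_supp_comb; apply Hphi).
  destruct (QN_scal m b c Hg _ (2, 0) (DN_f_minus psi Hpsi)) as [_ Hmid].
  rewrite (QN_ext m b c _ (fun x => Cadd (g n x) (g k x))) in Hmid
    by (intros x; unfold g, psi; apply Cpx_ext; unfold fsub, Cmul, Cadd, Csub, Copp; simpl; field).
  replace (Cmod2 (2, 0)) with 4 in Hmid by (unfold Cmod2, Rsqr; simpl; ring).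
  pose proof (QN_parallelogram m b c Hg (g n) (g k) (DN_f_minus _ (proj1 (Hphi n))) (DN_f_minus _ (proj1 (Hphi k)))).
  pose proof (approx_error_ge psi Hpsi). pose proof (proj2 (Hphi n)). pose proof (proj2 (Hphi k)).
  unfold g in *. lra.
Qed.

Lemma minimizer_of_glb : exists w, in_DN m b c w /\ in_DD m b c (fsub w f) /\
  forall psi, fin_supp psi -> QN_norm2 m b c w <= QN_norm2 m b c (fsub w psi).
Proof.
  destruct minimizing_sequence as [phi Hphi].
  set (g := fun n => fsub f (phi n)).
  assert (Hgn : forall n, in_DN m b c (g n)) by (intros n; apply DN_f_minus, Hphi).
  destruct (DN_complete m b c Hg g Hgn) as [w [Hw Hcv]].
  { intros e He. destruct (archimed_cor1 (e/4)) as [N [HN HN0]]; [lra|]. exists N. intros n k Hn Hk.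
    pose proof (minimizing_cauchy phi Hphi n k). pose proof (inv_S_le n N HN0 Hn). pose proof (inv_S_le k N HN0 Hk).
    unfold g; lra. }
  assert (Hcv' : Un_cv (fun n => QN_norm2 m b c (fsub w (g n))) 0)
    by (eapply Un_cv_ext; [|exact Hcv]; intros n; apply (QN_sub_sym m b c Hg); auto).
  exists w. split; [auto|split].
  - split; [apply (DN_sub m b c Hg); auto|]. intros e He.
    destruct (Hcv' e He) as [N HN]. specialize (HN N (le_n _)). unfold R_dist in HN; rewrite Rminus_0_r in HN.
    exists (fun x => Cadd (Cmul (-1, 0) (phi N x)) (Cmul (0, 0) (phi N x))).
    split; [apply fin_supp_comb; apply Hphi|].
    rewrite (QN_ext m b c _ (fsub w (g N))) by (intros x; unfold g; cpx_ring).
    pose proof (Rle_abs (QN_norm2 m b c (fsub w (g N)))). lra.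
  - intros psi Hpsi.
    assert (HpD : in_DN m b c (fsub w psi)) by (apply (DN_sub m b c Hg); auto; apply (DN_fin_supp m b c Hg); auto).
    assert (HwD : QN_norm2 m b c w <= d).
    { pose proof (CV_minus _ _ _ _ (QN_cv_of_close m b c Hg w g Hw Hgn Hcv) inv_S_cv) as Hl.
      rewrite Rminus_0_r in Hl. apply (Un_cv_le _ _ _ 0 Hl).
      intros n _. pose proof (proj2 (Hphi n)). unfold g in *; lra. }
    assert (HdP : d <= QN_norm2 m b c (fsub w psi)).
    { assert (Hclose : Un_cv (fun n => QN_norm2 m b c (fsub (fsub (g n) psi) (fsub w psi))) 0)
        by (eapply Un_cv_ext; [|exact Hcv]; intros n; apply (QN_ext m b c); intros x; cpx_ring).
      assert (Hgpsi : forall n, in_DN m b c (fsub (g n) psi))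
        by (intros n; apply (DN_sub m b c Hg); auto; apply (DN_fin_supp m b c Hg); auto).
      apply (Un_cv_ge _ _ _ 0 (QN_cv_of_close m b c Hg _ _ HpD Hgpsi Hclose)).
      intros n _.
      rewrite (QN_ext m b c _ (fsub f (fun x => Cadd (Cmul (1, 0) (phi n x)) (Cmul (1, 0) (psi x)))))
        by (intros x; unfold g; cpx_ring).
      apply approx_error_ge, fin_supp_comb; [apply Hphi|auto]. }
    lra.
Qed.
End Minimizer.

Theorem energy_minimizer {V : Type} (m : V -> R) (b : V -> V -> R) (c : V -> R) :
  is_graph m b c -> forall f, in_DN m b c f ->
  exists w, in_DN m b c w /\ in_DD m b c (fsub w f) /\
    forall psi, fin_supp psi -> QN_norm2 m b c w <= QN_norm2 m b c (fsub w psi).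
Proof.
  intros Hg f Hf. destruct (glb_exists (approx_errors m b c f)) as [d Hd].
  - exists (QN_norm2 m b c (fsub f (fun _ => C0))), (fun _ => C0). split; auto. exists []; auto.
  - intros r [phi [Hphi ->]]. apply QN_nonneg, (DN_f_minus m b c Hg f Hf); auto.
  - apply (minimizer_of_glb m b c Hg f Hf d Hd).
Qed.

(** * Minimizers solve [(L~ + 1) w = 0]

    Perturbing [w] at a single vertex [x] by [tau] changes the form by a
    quadratic polynomial in [tau] whose linear coefficient is
    [m(x) ((L~ + 1) w)(x)]; minimality forces it to vanish. *)

Section Harmonic.
Context {V : Type} (m : V -> R) (b : V -> V -> R) (c : V -> R).
Hypothesis Hg : is_graph m b c.
Variable w : V -> Cpx.
Hypothesis Hw : in_DN m b c w.

Lemma row_energy_summable x : nn_summable (fun q => b x q * Cmod2 (Csub (w x) (w q))).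
Proof.
  destruct (proj1 (in_DN_terms m b c w) Hw) as [_ [S1 _]].
  apply (nn_bound _ (nnsum (edge_term b w))). intros L HL.
  replace (fin_sum (fun q => b x q * Cmod2 (Csub (w x) (w q))) L) with (fin_sum (edge_term b w) (map (fun q => (x, q)) L))
    by (clear; induction L; simpl; f_equal; auto).
  apply nnsum_ge; auto. apply Injective_map_NoDup; auto. intros y z H; inversion H; auto.
Qed.

Lemma row_sum_exists x (pr : Cpx -> R) : (forall z, Rabs (pr z) <= (1 + Cmod2 z) / 2) ->
  exists S, R_has_sum (fun q => b x q * pr (Csub (w x) (w q))) S.
Proof.
  intros Hpr.
  destruct (nn_lin (b x) (fun q => b x q * Cmod2 (Csub (w x) (w q))) (/2) (/2) ltac:(lra) ltac:(lra)
     (b_nonneg m b c Hg x) (fun q => Rmult_le_pos _ _ (b_nonneg m b c Hg x q) (Cmod2_nonneg _))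
     (deg_summable m b c Hg x) (row_energy_summable x)) as [S _].
  eapply R_has_sum_dom; [|exact S]. intros q; simpl. rewrite Rabs_mult, (Rabs_right (b x q)) by (apply Rle_ge, (b_nonneg m b c Hg)).
  specialize (Hpr (Csub (w x) (w q))). pose proof (b_nonneg m b c Hg x q). nra.
Qed.

Lemma abs_le_half r : Rabs r <= (1 + r * r) / 2.
Proof. pose proof (Rle_0_sqr (Rabs r - 1)). pose proof (Rsqr_abs r). unfold Rsqr in *. nra. Qed.

Lemma fst_le_half z : Rabs (fst z) <= (1 + Cmod2 z) / 2.
Proof. pose proof (abs_le_half (fst z)). pose proof (Rle_0_sqr (snd z)). unfold Cmod2, Rsqr in *; lra. Qed.

Lemma snd_le_half z : Rabs (snd z) <= (1 + Cmod2 z) / 2.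
Proof. pose proof (abs_le_half (snd z)). pose proof (Rle_0_sqr (fst z)). unfold Cmod2, Rsqr in *; lra. Qed.

Section Perturbation.
Variables (x : V) (tau : Cpx).
Let w' := fsub w (cind x tau).

Lemma perturbed_away z : z <> x -> w' z = w z.
Proof. intros Hz. unfold w', fsub, cind. rewrite (dec_false Hz). apply Csub_C0. Qed.

Lemma perturbed_at : w' x = Csub (w x) tau.
Proof. unfold w', fsub, cind. rewrite (dec_true (eq_refl x)). auto. Qed.

Lemma perturbed_DN : in_DN m b c w'.
Proof. apply (DN_sub m b c Hg); auto. apply (DN_cind m b c Hg). Qed.

(** Every edge through [x] appears twice in the sum over ordered pairs. *)
Lemma edge_sum_change Sk :
  R_has_sum (fun q => b x q * (Cmod2 (Csub (Csub (w x) tau) (w q)) - Cmod2 (Csub (w x) (w q)))) Sk ->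
  nnsum (edge_term b w') = nnsum (edge_term b w) + (Sk + Sk).
Proof.
  set (k := fun q => b x q * (Cmod2 (Csub (Csub (w x) tau) (w q)) - Cmod2 (Csub (w x) (w q)))).
  intros Hk.
  assert (Hk1 : R_has_sum (fun p : V * V => ind (fst p = x) * k (snd p)) Sk).
  { apply (R_has_sum_reindex _ (fun q => (x, q)) snd (fun p => fst p = x)); simpl; auto.
    - intros [p1 p2]; simpl; intros ->; auto.
    - intros p Hp. unfold ind. rewrite (dec_false Hp). ring.
    - eapply R_has_sum_ext; [|exact Hk]. intros q. unfold ind. rewrite (dec_true (eq_refl x)). ring. }
  assert (Hk2 : R_has_sum (fun p : V * V => ind (snd p = x) * k (fst p)) Sk).
  { apply (R_has_sum_reindex _ (fun q => (q, x)) fst (fun p => snd p = x)); simpl; auto.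
    - intros [p1 p2]; simpl; intros ->; auto.
    - intros p Hp. unfold ind. rewrite (dec_false Hp). ring.
    - eapply R_has_sum_ext; [|exact Hk]. intros q. unfold ind. rewrite (dec_true (eq_refl x)). ring. }
  destruct (proj1 (in_DN_terms m b c w) Hw) as [_ [A1 _]].
  destruct (proj1 (in_DN_terms m b c w') perturbed_DN) as [_ [B1 _]].
  apply nnsum_eq_of_R_has_sum; auto; [apply (edge_term_nonneg m b c Hg)|].
  apply (R_has_sum_ext (fun p => edge_term b w p + (ind (fst p = x) * k (snd p) + ind (snd p = x) * k (fst p)))).
  - intros [p1 p2]. unfold edge_term, k, ind; simpl.
    destruct (dec (p1 = x)) eqn:E1; destruct (dec (p2 = x)) eqn:E2;
      [apply decP in E1; apply decP in E2|apply decP in E1; apply decN in E2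
      |apply decN in E1; apply decP in E2|apply decN in E1; apply decN in E2]; subst;
      rewrite ?perturbed_at, ?perturbed_away by auto.
    + rewrite !(b_diag m b c Hg). ring.
    + ring.
    + rewrite (b_sym m b c Hg p1 x), (Cmod2_sub_sym (w p1)), (Cmod2_sub_sym (w p1)). ring.
    + ring.
  - apply R_has_sum_plus; [apply R_has_sum_nn; auto; apply (edge_term_nonneg m b c Hg)|].
    apply R_has_sum_plus; auto.
Qed.

Lemma QN_point_perturbation S1 S2 :
  R_has_sum (fun q => b x q * fst (Csub (w x) (w q))) S1 ->
  R_has_sum (fun q => b x q * snd (Csub (w x) (w q))) S2 ->
  QN_norm2 m b c w' = QN_norm2 m b c w
    - 2 * (fst tau * (S1 + (c x + m x) * fst (w x)) + snd tau * (S2 + (c x + m x) * snd (w x)))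
    + Cmod2 tau * (nnsum (b x) + c x + m x).
Proof.
  intros HS1 HS2.
  destruct (proj1 (in_DN_terms m b c w) Hw) as [A3 [_ A2]].
  destruct (proj1 (in_DN_terms m b c w') perturbed_DN) as [B3 [_ B2]].
  pose proof (nnsum_point_change _ _ x (mass_term_nonneg m b c Hg w) (mass_term_nonneg m b c Hg w') A3 B3
    ltac:(intros z Hz; unfold mass_term; rewrite perturbed_away; auto)) as Q3.
  pose proof (nnsum_point_change _ _ x (kill_term_nonneg m b c Hg w) (kill_term_nonneg m b c Hg w') A2 B2
    ltac:(intros z Hz; unfold kill_term; rewrite perturbed_away; auto)) as Q2.
  set (Sk := -2 * (fst tau * S1 + snd tau * S2) + Cmod2 tau * nnsum (b x)).
  assert (Hk : R_has_sum (fun q => b x q * (Cmod2 (Csub (Csub (w x) tau) (w q)) - Cmod2 (Csub (w x) (w q)))) Sk).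
  { apply (R_has_sum_ext (fun q => (-2 * fst tau) * (b x q * fst (Csub (w x) (w q)))
        + ((-2 * snd tau) * (b x q * snd (Csub (w x) (w q))) + Cmod2 tau * b x q))).
    - intros q. unfold Cmod2, Rsqr, Csub, Cadd, Copp; simpl. ring.
    - unfold Sk. replace (-2 * (fst tau * S1 + snd tau * S2) + Cmod2 tau * nnsum (b x)) with
        ((-2 * fst tau) * S1 + ((-2 * snd tau) * S2 + Cmod2 tau * nnsum (b x))) by ring.
      apply R_has_sum_plus; [apply R_has_sum_scal; auto|]. apply R_has_sum_plus; [apply R_has_sum_scal; auto|].
      apply R_has_sum_scal, R_has_sum_nn; [apply (b_nonneg m b c Hg)|apply (deg_summable m b c Hg)]. }
  rewrite !QN_norm2_terms, (edge_sum_change Sk Hk), Q2, Q3.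
  unfold kill_term, mass_term, Sk. rewrite perturbed_at.
  unfold Cmod2, Rsqr, Csub, Cadd, Copp; simpl. field.
Qed.
End Perturbation.

(** If [e A] never exceeds [e^2 K / 2] then [A = 0] (take [e] of the sign
    of [A] and small). *)
Lemma quadratic_nonneg_zero A K : 0 <= K -> (forall e, 0 <= - 2 * (e * A) + (e * e) * K) -> A = 0.
Proof.
  intros HK H. specialize (H (A / (K + 1))).
  replace (- 2 * (A / (K + 1) * A) + (A / (K + 1) * (A / (K + 1))) * K)
    with (- (A * A) * (K + 2) / ((K + 1) * (K + 1))) in H by (field; lra).
  assert (0 < (K + 1) * (K + 1)) by nra.
  assert (0 <= - (A * A) * (K + 2)).
  { apply (Rmult_le_reg_r (/ ((K + 1) * (K + 1)))); [apply Rinv_0_lt_compat; auto|]. lra. }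
  nra.
Qed.

Lemma DN_in_Ftilde : in_Ftilde b w.
Proof.
  intros x. pose proof (Cnorm_nonneg (w x)).
  destruct (nn_lin (b x) (fun q => b x q * Cmod2 (Csub (w x) (w q))) (Cnorm (w x) + / 2) (/2) ltac:(lra) ltac:(lra)
     (b_nonneg m b c Hg x) (fun q => Rmult_le_pos _ _ (b_nonneg m b c Hg x q) (Cmod2_nonneg _))
     (deg_summable m b c Hg x) (row_energy_summable x)) as [S _].
  apply (nn_summable_mono _ _ S). intros y. pose proof (b_nonneg m b c Hg x y).
  pose proof (Cnorm_le_shift (w x) (w y)). pose proof (Cnorm_sq (Csub (w x) (w y))).
  pose proof (Rle_0_sqr (Cnorm (Csub (w x) (w y)) - 1)). unfold Rsqr in *.
  assert (Cnorm (w y) <= Cnorm (w x) + (1 + Cmod2 (Csub (w x) (w y))) / 2) by nra. nra.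
Qed.

Theorem minimizer_harmonic :
  (forall psi, fin_supp psi -> QN_norm2 m b c w <= QN_norm2 m b c (fsub w psi)) -> Lt_plus_one_zero m b c w.
Proof.
  intros Hmin. split; [apply DN_in_Ftilde|]. intros x.
  destruct (row_sum_exists x fst fst_le_half) as [S1 HS1].
  destruct (row_sum_exists x snd snd_le_half) as [S2 HS2].
  assert (HK : 0 <= nnsum (b x) + c x + m x).
  { pose proof (nnsum_nonneg _ (deg_summable m b c Hg x)). pose proof (c_nonneg m b c Hg x).
    pose proof (m_pos m b c Hg x). lra. }
  assert (Hfs : forall tau, fin_supp (cind x tau)).
  { intros tau. exists [x]. intros y Hy. unfold cind. rewrite dec_false; auto. intros ->; apply Hy; left; auto. }
  assert (A1 : S1 + (c x + m x) * fst (w x) = 0).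
  { apply (quadratic_nonneg_zero _ _ HK). intros e. pose proof (Hmin _ (Hfs (e, 0))).
    rewrite (QN_point_perturbation x (e, 0) S1 S2 HS1 HS2) in H. unfold Cmod2, Rsqr in H; simpl in H. lra. }
  assert (A2 : S2 + (c x + m x) * snd (w x) = 0).
  { apply (quadratic_nonneg_zero _ _ HK). intros e. pose proof (Hmin _ (Hfs (0, e))).
    rewrite (QN_point_perturbation x (0, e) S1 S2 HS1 HS2) in H. unfold Cmod2, Rsqr in H; simpl in H. lra. }
  exists (S1, S2). split.
  - apply C_has_sum_of_R.
    + eapply R_has_sum_ext; [|exact HS1]. intros y. unfold Cmul, RtoC, Csub, Cadd, Copp; simpl. ring.
    + eapply R_has_sum_ext; [|exact HS2]. intros y. unfold Cmul, RtoC, Csub, Cadd, Copp; simpl. ring.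
  - pose proof (m_pos m b c Hg x). apply Cpx_ext; unfold Cadd, Cmul, RtoC, C0; simpl.
    + replace S1 with (- ((c x + m x) * fst (w x))) by lra. field; lra.
    + replace S2 with (- ((c x + m x) * snd (w x))) by lra. field; lra.
Qed.
End Harmonic.

(** * Truncation

    [Ctr d] clips real and imaginary parts to [[-d, d]]; it is a normal
    contraction, so it does not increase the form, and its form tends to
    [0] as [d -> 0]. *)

Definition tr (d r : R) : R := Rmax (- d) (Rmin d r).
Definition Ctr (d : R) (z : Cpx) : Cpx := (tr d (fst z), tr d (snd z)).

Lemma tr_cases d a : 0 <= d ->
  (a <= - d /\ tr d a = - d) \/ (- d <= a <= d /\ tr d a = a) \/ (d <= a /\ tr d a = d).
Proof.
  intros Hd. unfold tr. destruct (Rle_dec a d); destruct (Rle_dec (-d) a).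
  - right; left. rewrite Rmin_right, Rmax_right; lra.
  - left. rewrite Rmin_right, Rmax_left; lra.
  - right; right. rewrite Rmin_left, Rmax_right; lra.
  - lra.
Qed.

Lemma tr_contraction d a z : 0 <= d -> Rsqr (tr d a - tr d z) <= Rsqr (a - z) /\ Rsqr (tr d a) <= Rsqr a.
Proof.
  intros Hd. split; apply Rsqr_le_abs_1.
  - pose proof (Rle_abs (a - z)); pose proof (Rle_abs (- (a - z))); rewrite Rabs_Ropp in *.
    apply Rabs_le.
    destruct (tr_cases d a Hd) as [[A1 ->]|[[A1 ->]|[A1 ->]]];
    destruct (tr_cases d z Hd) as [[C1 ->]|[[C1 ->]|[C1 ->]]]; lra.
  - pose proof (Rle_abs a); pose proof (Rle_abs (- a)); rewrite Rabs_Ropp in *.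
    apply Rabs_le. destruct (tr_cases d a Hd) as [[A1 ->]|[[A1 ->]|[A1 ->]]]; lra.
Qed.

Lemma tr_small d a : 0 <= d -> Rsqr (tr d a) <= d * d.
Proof. intros Hd. unfold Rsqr. destruct (tr_cases d a Hd) as [[A1 ->]|[[A1 ->]|[A1 ->]]]; nra. Qed.

Lemma tr_id d a : Rabs a <= d -> tr d a = a.
Proof.
  intros H. pose proof (Rabs_pos a). pose proof (Rle_abs a); pose proof (Rle_abs (- a)). rewrite Rabs_Ropp in *.
  destruct (tr_cases d a) as [[A1 A2]|[[A1 A2]|[A1 A2]]]; lra.
Qed.

Lemma Ctr_lip d a z : 0 <= d -> Cmod2 (Csub (Ctr d a) (Ctr d z)) <= Cmod2 (Csub a z).
Proof.
  intros Hd. unfold Cmod2, Ctr. rewrite !Csub_fst, !Csub_snd; simpl.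
  pose proof (proj1 (tr_contraction d (fst a) (fst z) Hd)). pose proof (proj1 (tr_contraction d (snd a) (snd z) Hd)). lra.
Qed.

Lemma Ctr_le d z : 0 <= d -> Cmod2 (Ctr d z) <= Cmod2 z.
Proof.
  intros Hd. unfold Cmod2, Ctr; simpl.
  pose proof (proj2 (tr_contraction d (fst z) (fst z) Hd)). pose proof (proj2 (tr_contraction d (snd z) (snd z) Hd)). lra.
Qed.

Lemma Ctr_small d z : 0 <= d -> Cmod2 (Ctr d z) <= 2 * (d * d).
Proof. intros Hd. unfold Cmod2, Ctr; simpl. pose proof (tr_small d (fst z) Hd). pose proof (tr_small d (snd z) Hd). lra. Qed.

Lemma nnsum_cv0_of_bounds {T : Type} (f : nat -> T -> R) (g K : T -> R) :
  (forall n x, 0 <= f n x) -> (forall n x, f n x <= g x) -> nn_summable g ->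
  (forall n x, f n x <= K x * (/ INR (S n) * / INR (S n))) -> Un_cv (fun n => nnsum (f n)) 0.
Proof.
  intros H0 Hg Sg HK. apply (nnsum_dominated_cv f g); auto. intros x.
  apply (Un_cv_squeeze0 _ (fun n => K x * (/ INR (S n) * / INR (S n)))); [intros n; split; auto|].
  replace 0 with (K x * (0 * 0)) by ring. apply CV_mult; [apply Un_cv_const|]. apply CV_mult; apply inv_S_cv.
Qed.

Section Truncation.
Context {V : Type} (m : V -> R) (b : V -> V -> R) (c : V -> R).
Hypothesis Hg : is_graph m b c.

Lemma truncation_cv0 u : in_DN m b c u -> Un_cv (fun n => QN_norm2 m b c (fun x => Ctr (/ INR (S n)) (u x))) 0.
Proof.
  intros Hu. destruct (proj1 (in_DN_terms m b c u) Hu) as [S3 [S1 S2]].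
  set (d := fun n => / INR (S n)).
  assert (Hd : forall n, 0 <= d n) by (intros; apply Rlt_le, inv_S_pos).
  assert (C1 : Un_cv (fun n => nnsum (edge_term b (fun x => Ctr (d n) (u x)))) 0).
  { apply (nnsum_cv0_of_bounds _ (edge_term b u) (fun p => 8 * b (fst p) (snd p))); auto.
    - intros; apply (edge_term_nonneg m b c Hg).
    - intros n p. unfold edge_term. pose proof (b_nonneg m b c Hg (fst p) (snd p)).
      pose proof (Ctr_lip (d n) (u (fst p)) (u (snd p)) (Hd n)). nra.
    - intros n p. unfold edge_term. pose proof (b_nonneg m b c Hg (fst p) (snd p)).
      pose proof (Cmod2_sub_le2 (Ctr (d n) (u (fst p))) (Ctr (d n) (u (snd p)))).
      pose proof (Ctr_small (d n) (u (fst p)) (Hd n)). pose proof (Ctr_small (d n) (u (snd p)) (Hd n)).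
      fold (d n). nra. }
  assert (C2 : Un_cv (fun n => nnsum (kill_term c (fun x => Ctr (d n) (u x)))) 0).
  { apply (nnsum_cv0_of_bounds _ (kill_term c u) (fun x => 2 * c x)); auto.
    - intros; apply (kill_term_nonneg m b c Hg).
    - intros n x. unfold kill_term. pose proof (c_nonneg m b c Hg x). pose proof (Ctr_le (d n) (u x) (Hd n)). nra.
    - intros n x. unfold kill_term. pose proof (c_nonneg m b c Hg x). pose proof (Ctr_small (d n) (u x) (Hd n)).
      fold (d n). nra. }
  assert (C3 : Un_cv (fun n => nnsum (mass_term m (fun x => Ctr (d n) (u x)))) 0).
  { apply (nnsum_cv0_of_bounds _ (mass_term m u) (fun x => 2 * m x)); auto.
    - intros; apply (mass_term_nonneg m b c Hg).
    - intros n x. unfold mass_term. pose proof (m_pos m b c Hg x). pose proof (Ctr_le (d n) (u x) (Hd n)). nra.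
    - intros n x. unfold mass_term. pose proof (m_pos m b c Hg x). pose proof (Ctr_small (d n) (u x) (Hd n)).
      fold (d n). nra. }
  apply (Un_cv_ext (fun n => / 2 * nnsum (edge_term b (fun x => Ctr (d n) (u x)))
     + nnsum (kill_term c (fun x => Ctr (d n) (u x))) + nnsum (mass_term m (fun x => Ctr (d n) (u x)))));
    [intros; reflexivity|].
  replace 0 with (/ 2 * 0 + 0 + 0) by ring. apply CV_plus; [apply CV_plus|]; auto.
  apply CV_mult; auto. apply Un_cv_const.
Qed.
End Truncation.

(** * Injectivity when the completion is compact *)

Fixpoint iter_list {V : Type} (F : list V -> V) (n : nat) : list V :=
  match n with O => [] | S k => F (iter_list F k) :: iter_list F k end.

Lemma escaping_sequence {V : Type} (P : V -> Prop) : (forall l, exists x, ~ In x l /\ P x) ->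
  exists x : nat -> V, (forall n, P (x n)) /\ (forall k n, (k < n)%nat -> x k <> x n).
Proof.
  intros H.
  set (F := fun l => proj1_sig (constructive_indefinite_description _ (H l))).
  assert (HF : forall l, ~ In (F l) l /\ P (F l)) by (intros l; unfold F; apply proj2_sig).
  assert (Hin : forall k n, (k < n)%nat -> In (F (iter_list F k)) (iter_list F n)).
  { intros k n; induction n as [|n IH]; intros Hk; [lia|]. simpl.
    destruct (Nat.eq_dec k n) as [->|Hne]; [left; auto|right; apply IH; lia]. }
  exists (fun n => F (iter_list F n)). split; [intros n; apply HF|].
  intros k n Hkn Heq. apply (proj1 (HF (iter_list F n))). rewrite <- Heq. apply Hin; auto.
Qed.

Section Compactness.
Context {V : Type} (m : V -> R) (b : V -> V -> R) (c : V -> R).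
Hypotheses (Hg : is_graph m b c) (Hconn : connected b).

(** Vertices are isolated: every edge at [y] has length at least
    [1 / sqrt(deg y)]. *)
Lemma dist_lower x y : x <> y -> / sqrt (nnsum (b y)) <= dist b x y.
Proof.
  assert (Hdeg : forall z y, b z y <= nnsum (b y)).
  { intros z v. rewrite (b_sym m b c Hg z v). replace (b v z) with (fin_sum (b v) [z]) by (simpl; ring).
    apply nnsum_ge; [apply (deg_summable m b c Hg)|repeat constructor; auto]. }
  assert (Hchain : forall l z, l <> [] -> chain b z l -> / sqrt (nnsum (b (last (z :: l) z))) <= path_length_from b z l).
  { intros l; induction l as [|a l IH]; intros z Hne Hch; [congruence|].
    destruct Hch as [Hb Hch]. change (last (z :: a :: l) z) with (last (a :: l) z).
    rewrite (last_default a l z a). simpl path_length_from.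
    destruct l as [|a' l'].
    - simpl. rewrite Rplus_0_r. apply Rinv_le_contravar; [apply sqrt_lt_R0; auto|apply sqrt_le_1_alt, Hdeg].
    - pose proof (inv_sqrt_nonneg (b z a)). specialize (IH a ltac:(congruence) Hch). lra. }
  intros Hne. apply (dist_spec b Hconn x y). intros L [[|x1 l] [Hp ->]]; [destruct Hp|].
  destruct Hp as [-> [Hch Hl]]. simpl path_length. rewrite <- Hl. apply Hchain; auto.
  intros ->. simpl in Hl. congruence.
Qed.

Lemma deg_pos x y : x <> y -> 0 < nnsum (b y).
Proof.
  intros Hne. destruct (Hconn y x) as [[|y1 l] Hp]; [destruct Hp|]. destruct Hp as [-> [Hch Hl]].
  destruct l as [|z l]; [simpl in Hl; congruence|]. destruct Hch as [Hb _].
  pose proof (nnsum_ge (b y) [z] (deg_summable m b c Hg y) ltac:(repeat constructor; auto)). simpl in H. lra.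
Qed.

Lemma injective_not_cv_vertex (x : nat -> V) y :
  (forall k n, (k < n)%nat -> x k <> x n) -> ~ Un_cv (fun k => dist b (x k) y) 0.
Proof.
  intros Hinj Hcv.
  assert (Hdeg : 0 < nnsum (b y)).
  { destruct (classic (x 0%nat = y)) as [E|E]; [|apply (deg_pos (x 0%nat)); auto].
    apply (deg_pos (x 1%nat)). rewrite <- E. intros E2. apply (Hinj 0%nat 1%nat); auto. }
  destruct (Hcv (/ sqrt (nnsum (b y)))) as [K HK]; [apply Rinv_0_lt_compat, sqrt_lt_R0; auto|].
  assert (Hey : forall k, (K <= k)%nat -> x k = y).
  { intros k Hk. apply NNPP; intros Hne. pose proof (dist_lower _ _ Hne). specialize (HK k Hk).
    unfold R_dist in HK. rewrite Rminus_0_r, Rabs_right in HK by (apply Rle_ge, dist_nonneg; auto). lra. }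
  apply (Hinj K (S K)); [lia|]. rewrite (Hey K), (Hey (S K)); auto.
Qed.

Lemma DN_bound_by_dhat u x t : in_DN m b c u -> cauchy b t -> C_cv (fun n => u (t n)) C0 ->
  Cnorm (u x) <= NQ m b c u * dhat b (fun _ => x) t.
Proof.
  intros Hu Ht Hv.
  assert (H0 : Un_cv (fun n => Cnorm (u (t n))) 0).
  { intros e He. destruct (Hv e He) as [N HN]. exists N. intros n Hn. specialize (HN n Hn).
    rewrite Csub_C0 in HN. unfold R_dist. rewrite Rminus_0_r, Rabs_right by (apply Rle_ge, Cnorm_nonneg). auto. }
  pose proof (CV_plus _ _ _ _ H0 (CV_mult _ _ _ _ (Un_cv_const (NQ m b c u))
    (dhat_spec b Hconn _ t (cauchy_const b Hconn x) Ht))) as Hl.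
  rewrite Rplus_0_l in Hl. apply (Un_cv_ge _ _ _ 0 Hl). intros n _.
  pose proof (Cnorm_le_shift (u (t n)) (u x)). pose proof (DN_lipschitz m b c Hg Hconn u x (t n) Hu).
  rewrite Cnorm_sub_sym in H1. lra.
Qed.

Lemma dist_le_dhat x y t : cauchy b t -> Un_cv (fun n => dist b (t n) y) 0 -> dist b x y <= dhat b (fun _ => x) t.
Proof.
  intros Ht Hy.
  pose proof (CV_plus _ _ _ _ (dhat_spec b Hconn _ t (cauchy_const b Hconn x) Ht) Hy) as Hl.
  rewrite Rplus_0_r in Hl. apply (Un_cv_ge _ _ _ 0 Hl). intros n _. apply dist_triangle; auto.
Qed.

(** Compactness of the completion: a function of [D(Q^(N))] vanishing at
    infinity is small outside a finite set.  Otherwise an injective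
    sequence of vertices where [|u| > d] has a subsequence converging in the
    completion, either to a vertex (impossible, vertices are isolated) or
    to a point at infinity (impossible, [u] vanishes there). *)
Lemma small_outside_finite u : Vhat_compact b -> in_DN m b c u ->
  (forall s, Vinf_pt b s -> C_cv (fun n => u (s n)) C0) ->
  forall d, d > 0 -> exists l, forall x, ~ In x l -> Cnorm (u x) <= d.
Proof.
  intros Hcomp Hu Hvan d Hd. apply NNPP; intros Hcon.
  destruct (escaping_sequence (fun x => Cnorm (u x) > d)) as [x [Hbig Hinj]].
  { intros l. apply NNPP; intros Hn. apply Hcon. exists l. intros z Hz.
    apply Rnot_lt_le; intros Hlt; apply Hn; exists z; auto. }
  destruct (Hcomp (fun k _ => x k)) as [phi [Hphi [t [Ht Hcv]]]]; [intros k; apply cauchy_const; auto|].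
  assert (Hinj' : forall k n, (k < n)%nat -> x (phi k) <> x (phi n)).
  { intros k n Hkn. apply Hinj. induction Hkn as [|n' Hle IH]; [apply Hphi|].
    specialize (Hphi n'). lia. }
  destruct (classic (exists y, Un_cv (fun n => dist b (t n) y) 0)) as [[y Hy]|Hny].
  - apply (injective_not_cv_vertex (fun k => x (phi k)) y Hinj').
    apply (Un_cv_squeeze0 _ (fun k => dhat b (fun _ => x (phi k)) t)); [|exact Hcv].
    intros k; split; [apply dist_nonneg; auto|apply dist_le_dhat; auto].
  - assert (Hdh : forall k, 0 <= dhat b (fun _ => x (phi k)) t).
    { intros k. apply (Un_cv_ge _ _ _ 0 (dhat_spec b Hconn _ t (cauchy_const b Hconn _) Ht)).
      intros; apply dist_nonneg; auto. }
    pose proof (NQ_nonneg m b c u).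
    destruct (Hcv (d / (NQ m b c u + 1))) as [K HK]; [apply Rdiv_lt_0_compat; lra|].
    specialize (HK K (le_n _)). unfold R_dist in HK.
    rewrite Rminus_0_r, Rabs_right in HK by (apply Rle_ge, Hdh).
    pose proof (DN_bound_by_dhat u (x (phi K)) t Hu Ht (Hvan t (conj Ht Hny))).
    specialize (Hbig (phi K)).
    assert (NQ m b c u * dhat b (fun _ => x (phi K)) t <= (NQ m b c u + 1) * dhat b (fun _ => x (phi K)) t)
      by (apply Rmult_le_compat_r; [apply Hdh|lra]).
    apply (Rmult_lt_compat_l (NQ m b c u + 1)) in HK; [|lra].
    replace ((NQ m b c u + 1) * (d / (NQ m b c u + 1))) with d in HK by (field; lra). lra.
Qed.

(** Injectivity: when [V^] is compact, a function of [D(Q^(N))] vanishing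
    on [V_infty] lies in [D(Q^(D))]: [u - Ctr d u] is finitely supported and
    [Ctr d u] has small form. *)
Theorem vanishing_at_infinity_DD u : Vhat_compact b -> in_DN m b c u ->
  (forall s, Vinf_pt b s -> C_cv (fun n => u (s n)) C0) -> in_DD m b c u.
Proof.
  intros Hcomp Hu Hvan. split; auto. intros e He.
  destruct (truncation_cv0 m b c Hg u Hu e He) as [N HN]. specialize (HN N (le_n _)).
  unfold R_dist in HN. rewrite Rminus_0_r in HN.
  set (d := / INR (S N)). assert (Hd : d > 0) by apply inv_S_pos.
  destruct (small_outside_finite u Hcomp Hu Hvan d Hd) as [l Hl].
  exists (fun x => Csub (u x) (Ctr d (u x))). split.
  - exists l. intros x Hx. specialize (Hl x Hx).
    pose proof (Cnorm_fst (u x)); pose proof (Cnorm_snd (u x)).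
    unfold Ctr. rewrite (tr_id d (fst (u x))), (tr_id d (snd (u x))) by lra. cpx_ring.
  - rewrite (QN_ext m b c _ (fun x => Ctr d (u x))) by (intros x; cpx_ring).
    pose proof (Rle_abs (QN_norm2 m b c (fun x => Ctr (/ INR (S N)) (u x)))). fold d in H, HN. lra.
Qed.
End Compactness.

Section BoundaryMap.
Context {V : Type} (m : V -> R) (b : V -> V -> R) (c : V -> R).
Hypotheses (Hg : is_graph m b c) (Hconn : connected b).

Lemma bval_eq_of_DD u v s : in_DN m b c u -> in_DN m b c v -> in_DD m b c (fsub u v) -> Vinf_pt b s ->
  bval u s = bval v s.
Proof.
  intros Hu Hv Huv Hs.
  pose proof (bval_sub m b c Hg Hconn u v s Hu Hv (proj1 Hs)) as E.
  rewrite (bval_DD m b c Hg Hconn _ s Huv Hs) in E.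
  apply Cpx_ext; [pose proof (f_equal fst E)|pose proof (f_equal snd E)]; simpl in *; lra.
Qed.

(** Every boundary value is attained by a solution of [(L~ + 1) w = 0]:
    the minimizer of the form on [f + C_c(V)]. *)
Theorem harmonic_representative f : in_DN m b c f ->
  exists w, in_DN m b c w /\ Lt_plus_one_zero m b c w /\ forall s, Vinf_pt b s -> bval w s = bval f s.
Proof.
  intros Hf. destruct (energy_minimizer m b c Hg f Hf) as [w [Hw [HD Hmin]]].
  exists w. split; [auto|split].
  - apply (minimizer_harmonic m b c Hg w Hw Hmin).
  - intros s Hs. apply bval_eq_of_DD; auto.
Qed.

Theorem bval_injective u v : Vhat_compact b -> in_DN m b c u -> in_DN m b c v ->
  (forall s, Vinf_pt b s -> bval u s = bval v s) -> in_DD m b c (fsub u v).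
Proof.
  intros Hcomp Hu Hv Heq. apply (vanishing_at_infinity_DD m b c Hg Hconn); auto.
  - apply (DN_sub m b c Hg); auto.
  - intros s Hs. replace C0 with (Csub (bval u s) (bval v s)) by (rewrite Heq; auto; cpx_ring).
    apply C_cv_sub; apply (bval_spec m b c Hg Hconn); auto; apply Hs.
Qed.
End BoundaryMap.

Theorem mainTheorem11 (V : Type) (m : V -> R) (b : V -> V -> R) (c : V -> R)
  (HV : countable_set V) (Hg : is_graph m b c) (Hconn : connected b) :
  (forall u, in_DD m b c u -> forall s, Vinf_pt b s -> C_cv (fun n => u (s n)) C0)
  /\
  (forall (u v : V -> Cpx) (al be : Cpx), in_DN m b c u -> in_DN m b c v ->
     forall s, Vinf_pt b s ->
       bval (fun x => Cadd (Cmul al (u x)) (Cmul be (v x))) s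
       = Cadd (Cmul al (bval u s)) (Cmul be (bval v s)))
  /\
  (forall (un : nat -> V -> Cpx) (u : V -> Cpx),
     (forall n, in_DN m b c (un n)) -> in_DN m b c u ->
     (exists wn : nat -> V -> Cpx, (forall n, in_DD m b c (wn n)) /\
        Un_cv (fun n => QN_norm2 m b c (fsub (fsub (un n) u) (wn n))) 0) ->
     forall s, Vinf_pt b s -> exists r, r > 0 /\
       forall eps, eps > 0 -> exists N, forall n, (N <= n)%nat ->
         forall t, Vinf_pt b t -> dhat b s t < r ->
           Cnorm (Csub (bval (un n) t) (bval u t)) <= eps)
  /\
  (forall g : (nat -> V) -> Cpx,
     (exists f, in_DN m b c f /\ forall s, Vinf_pt b s -> g s = bval f s) ->
     exists u, in_DN m b c u /\ forall s, Vinf_pt b s -> bval u s = g s)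
  /\
  (forall f, in_DN m b c f -> exists w, in_DN m b c w /\ Lt_plus_one_zero m b c w /\
     forall s, Vinf_pt b s -> bval w s = bval f s)
  /\
  (Vhat_compact b ->
     forall u v, in_DN m b c u -> in_DN m b c v ->
       (forall s, Vinf_pt b s -> bval u s = bval v s) -> in_DD m b c (fsub u v)).
Proof.
  split; [intros u Hu s Hs; apply (DD_vanish_at_infinity m b c Hg Hconn); auto|].
  split; [intros u v al be Hu Hv s Hs; apply (bval_linear m b c Hg Hconn); auto; apply Hs|].
  split; [apply (bval_continuous m b c Hg Hconn)|].
  (* onto: the target is by definition the set of boundary values *)
  split; [intros g [f [Hf Hgf]]; exists f; split; auto; intros s Hs; rewrite Hgf; auto|].
  split; [apply (harmonic_representative m b c Hg Hconn)|].
  intros Hcomp u v Hu Hv Heq. apply (bval_injective m b c Hg Hconn); auto.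
Qed.
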